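(* Let $\rho\in\mathbb S^m(\mathbb R^n;\mathscr A_\theta)$, $m\in\mathbb R$. For every $s\in\mathbb R$, the operator $P_\rho$ extends uniquely to a continuous linear map $P_\rho:\mathcal H^{(s+m)}_\theta\to\mathcal H^{(s)}_\theta$. Moreover, $\rho\mapsto P_\rho$ is a continuous linear map from $\mathbb S^m(\mathbb R^n;\mathscr A_\theta)$ to $\mathscr L(\mathcal H^{(s+m)}_\theta,\mathcal H^{(s)}_\theta)$ (bounded operators with the operator norm topology).
   Context: Fix $n\ge 2$ and a real antisymmetric $n\times n$ matrix $\theta$. The noncommutative torus $A_\theta$ is the $C^*$-algebra generated by unitaries $U_1,\dots,U_n$ with $U_kU_j=e^{2i\pi\theta_{jk}}U_jU_k$; $U^k=U_1^{k_1}\cdots U_n^{k_n}$; $\|\cdot\|$ is the $C^*$-norm; $\tau$ is the continuous trace with $\tau(U^0)=1$, $\tau(U^k)=0$ for $k\ne0$. $\mathbb R^n$ acts by $*$-automorphisms $\alpha_s$ with $\alpha_s(U^k)=e^{is\cdot k}U^k$. $\mathscr A_\theta$ is the set of $u\in A_\theta$ with $s\mapsto\alpha_s(u)$ smooth, equivalently the sums $\sum u_kU^k$ with $(u_k)$ rapidly decreasing; $\delta_j(u)=-i\,\partial_{s_j}\alpha_s(u)|_{s=0}$, $\delta^\alpha=\delta_1^{\alpha_1}\cdots\delta_n^{\alpha_n}$; it is a Fréchet algebra for the seminorms $u\mapsto\|\delta^\alpha u\|$. $\mathscr A_\theta'$ is the strong dual of $\mathscr A_\theta$, containing $\mathscr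 A_\theta$ via $\langle u,v\rangle=\tau(uv)$; $u\in\mathscr A_\theta'$ has Fourier coefficients $u_k=\langle u,(U^k)^*\rangle$. $\mathcal H^{(s)}_\theta=\{u\in\mathscr A_\theta':\sum_k(1+|k|^2)^s|u_k|^2<\infty\}$ with norm $\|u\|_s=\big(\sum_k(1+|k|^2)^s|u_k|^2\big)^{1/2}$; $\mathscr A_\theta$ is dense in it. $\mathbb S^m(\mathbb R^n;\mathscr A_\theta)$ is the space of smooth $\rho:\mathbb R^n\to\mathscr A_\theta$ with $\|\delta^\alpha\partial_\xi^\beta\rho(\xi)\|\le C_{\alpha\beta}(1+|\xi|)^{m-|\beta|}$, Fréchet for the seminorms $p^{(m)}_N(\rho)=\sup_{|\alpha|+|\beta|\le N}\sup_\xi(1+|\xi|)^{-m+|\beta|}\|\delta^\alpha\partial_\xi^\beta\rho(\xi)\|$. $P_\rho:\mathscr A_\theta\to\mathscr A_\theta$ is the pseudodifferential operator $P_\rho u=\iint e^{is\cdot\xi}\rho(\xi)\alpha_{-s}(u)\,ds\,(2\pi)^{-n}d\xi$ (oscillating integral); concretely $P_\rho\big(\sum_ku_kU^k\big)=\sum_ku_k\rho(k)U^k$. *)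

From Stdlib Require Import Reals Lra Lia ZArith List ClassicalEpsilon.
From Coquelicot Require Import Coquelicot.
Open Scope R_scope.

(** Points of Z^n (resp. R^n, N^n) are functions [nat -> Z] (resp. [nat -> R],
    [nat -> nat]) vanishing at every index >= n; only such "valid" points are
    ever used. *)
Definition validZ (n : nat) (k : nat -> Z) : Prop := forall i, (n <= i)%nat -> k i = 0%Z.
Definition validR (n : nat) (x : nat -> R) : Prop := forall i, (n <= i)%nat -> x i = 0.
Definition validN (n : nat) (a : nat -> nat) : Prop := forall i, (n <= i)%nat -> a i = 0%nat.

Definition subZ (k l : nat -> Z) : nat -> Z := fun i => (k i - l i)%Z.
Definition toR (k : nat -> Z) : nat -> R := fun i => IZR (k i).

Definition isum (n : nat) (f : nat -> R) : R := fold_right (fun i acc => f i + acc) 0 (seq 0 n).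
Definition iprod (n : nat) (f : nat -> R) : R := fold_right (fun i acc => f i * acc) 1 (seq 0 n).

Definition normZ (n : nat) (k : nat -> Z) : R := sqrt (isum n (fun i => (IZR (k i))^2)).
Definition normR (n : nat) (x : nat -> R) : R := sqrt (isum n (fun i => (x i)^2)).
Definition mlen (n : nat) (a : nat -> nat) : nat := fold_right (fun i acc => (a i + acc)%nat) 0%nat (seq 0 n).

Definition incrN (a : nat -> nat) (j : nat) : nat -> nat :=
  fun i => if Nat.eqb i j then S (a i) else a i.
Definition shiftR (x : nat -> R) (j : nat) (h : R) : nat -> R :=
  fun i => if Nat.eqb i j then x i + h else x i.
Definition zeroN : nat -> nat := fun _ => 0%nat.

Definition finset (n : nat) (F : list (nat -> Z)) : Prop := NoDup F /\ List.Forall (validZ n) F.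

Definition sumC (F : list (nat -> Z)) (f : (nat -> Z) -> C) : C :=
  fold_right (fun k acc => Cplus (f k) acc) (RtoC 0) F.
Definition sumR (F : list (nat -> Z)) (f : (nat -> Z) -> R) : R :=
  fold_right (fun k acc => f k + acc) 0 F.

Definition has_sumC (n : nat) (f : (nat -> Z) -> C) (S : C) : Prop :=
  forall eps, 0 < eps -> exists F0, finset n F0 /\
    forall F, finset n F -> incl F0 F -> Cmod (Cminus (sumC F f) S) < eps.
Definition has_sumR (n : nat) (f : (nat -> Z) -> R) (S : R) : Prop :=
  forall eps, 0 < eps -> exists F0, finset n F0 /\
    forall F, finset n F -> incl F0 F -> Rabs (sumR F f - S) < eps.

(* the sum over Z^n of a summable family (arbitrary value otherwise) *)
Definition zsumC (n : nat) (f : (nat -> Z) -> C) : C :=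
  epsilon (inhabits (RtoC 0)) (has_sumC n f).
Definition zsumR (n : nat) (f : (nat -> Z) -> R) : R :=
  epsilon (inhabits 0) (has_sumR n f).

(** * Elements of A_theta / its dual are given by their Fourier coefficients
      [u : (nat -> Z) -> C], u = sum_k u_k U^k. *)

(* (u_k) rapidly decreasing, i.e. u in the smooth algebra \mathscr A_theta *)
Definition rapid (n : nat) (u : (nat -> Z) -> C) : Prop :=
  forall p : nat, exists M, forall k, validZ n k -> Cmod (u k) * (1 + normZ n k) ^ p <= M.

Definition kpow (n : nat) (a : nat -> nat) (k : nat -> Z) : R := iprod n (fun i => (IZR (k i)) ^ (a i)).
Definition delta (n : nat) (a : nat -> nat) (u : (nat -> Z) -> C) : (nat -> Z) -> C :=
  fun k => Cmult (RtoC (kpow n a k)) (u k).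

(* U^l U^j = cocycle theta l j U^(l+j), computed from U_k U_j = e^{2 i pi theta_jk} U_j U_k *)
Definition cocycle (n : nat) (theta : nat -> nat -> R) (l j : nat -> Z) : C :=
  let x := 2 * PI * isum n (fun i => isum n (fun i' =>
              if Nat.ltb i i' then theta i i' * IZR (l i') * IZR (j i) else 0)) in
  (cos x, sin x).

(* left regular (GNS of tau) representation on l^2(Z^n):
   (lambda(u) xi)_k = sum_l u_{k-l} c(k-l,l) xi_l, for xi supported in the finite set S *)
Definition lreg (n : nat) (theta : nat -> nat -> R) (u : (nat -> Z) -> C)
    (S : list (nat -> Z)) (xi : (nat -> Z) -> C) : (nat -> Z) -> C :=
  fun k => sumC S (fun l => Cmult (Cmult (u (subZ k l)) (cocycle n theta (subZ k l) l)) (xi l)).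

(* C*-norm bound ||u|| <= c, the C*-norm being the operator norm in the
   (faithful) regular representation, tested on finitely supported vectors *)
Definition cstar_le (n : nat) (theta : nat -> nat -> R) (u : (nat -> Z) -> C) (c : R) : Prop :=
  0 <= c /\
  forall S xi, finset n S -> forall F, finset n F ->
    sumR F (fun k => (Cmod (lreg n theta u S xi k))^2) <= c^2 * sumR S (fun l => (Cmod (xi l))^2).

Definition sweight (n : nat) (s : R) (k : nat -> Z) : R := Rpower (1 + (normZ n k)^2) s.
Definition in_Hs (n : nat) (s : R) (u : (nat -> Z) -> C) : Prop :=
  exists S, has_sumR n (fun k => sweight n s k * (Cmod (u k))^2) S.
Definition hs_norm (n : nat) (s : R) (u : (nat -> Z) -> C) : R :=
  sqrt (zsumR n (fun k => sweight n s k * (Cmod (u k))^2)).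

Definition Symb := (nat -> R) -> (nat -> Z) -> C.

(* f has partial derivative D in direction j at xi, in the Frechet topology of
   \mathscr A_theta (seminorms u |-> ||delta^alpha u||) *)
Definition has_pderiv (n : nat) (theta : nat -> nat -> R) (f : Symb) (xi : nat -> R) (j : nat)
    (D : (nat -> Z) -> C) : Prop :=
  forall a, validN n a -> forall eps, 0 < eps -> exists del, 0 < del /\
    forall h, 0 < Rabs h < del ->
      cstar_le n theta
        (delta n a (fun k => Cminus (Cdiv (Cminus (f (shiftR xi j h) k) (f xi k)) (RtoC h)) (D k))) eps.

(* D beta = d_xi^beta rho, all derivatives exist, valued in \mathscr A_theta *)
Definition deriv_family (n : nat) (theta : nat -> nat -> R) (rho : Symb)
    (D : (nat -> nat) -> Symb) : Prop :=
  D zeroN = rho /\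
  (forall b xi, validN n b -> validR n xi -> rapid n (D b xi)) /\
  (forall b xi j, validN n b -> validR n xi -> (j < n)%nat ->
     has_pderiv n theta (D b) xi j (D (incrN b j) xi)).

Definition in_symbol (n : nat) (theta : nat -> nat -> R) (m : R) (rho : Symb) : Prop :=
  exists D, deriv_family n theta rho D /\
    forall a b, validN n a -> validN n b -> exists c, forall xi, validR n xi ->
      cstar_le n theta (delta n a (D b xi)) (c * Rpower (1 + normR n xi) (m - INR (mlen n b))).

Definition sym_bound (n : nat) (theta : nat -> nat -> R) (m : R) (D : (nat -> nat) -> Symb)
    (N : nat) (M : R) : Prop :=
  forall a b, validN n a -> validN n b -> (mlen n a + mlen n b <= N)%nat ->
    forall xi, validR n xi ->
      cstar_le n theta (delta n a (D b xi)) (M * Rpower (1 + normR n xi) (m - INR (mlen n b))).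

(** * The pseudodifferential operator on \mathscr A_theta:
      P_rho (sum_k u_k U^k) = sum_k u_k rho(k) U^k, i.e.
      (P_rho u)_j = sum_k u_k rho(k)_{j-k} c(j-k,k). *)
Definition Prho (n : nat) (theta : nat -> nat -> R) (rho : Symb) (u : (nat -> Z) -> C) : (nat -> Z) -> C :=
  fun j => zsumC n (fun k => Cmult (Cmult (u k) (rho (toR k) (subZ j k))) (cocycle n theta (subZ j k) k)).

Definition eqv (n : nat) (u v : (nat -> Z) -> C) : Prop := forall k, validZ n k -> u k = v k.

Definition lincomb (a : C) (u : (nat -> Z) -> C) (b : C) (v : (nat -> Z) -> C) : (nat -> Z) -> C :=
  fun k => Cplus (Cmult a (u k)) (Cmult b (v k)).

Definition is_extension (n : nat) (theta : nat -> nat -> R) (rho : Symb) (s m : R)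
    (T : ((nat -> Z) -> C) -> ((nat -> Z) -> C)) : Prop :=
  (forall u, in_Hs n (s + m) u -> in_Hs n s (T u)) /\
  (forall u v a b, in_Hs n (s + m) u -> in_Hs n (s + m) v ->
     eqv n (T (lincomb a u b v)) (lincomb a (T u) b (T v))) /\
  (exists c, 0 <= c /\ forall u, in_Hs n (s + m) u -> hs_norm n s (T u) <= c * hs_norm n (s + m) u) /\
  (forall u, rapid n u -> eqv n (T u) (Prho n theta rho u)).

Definition antisym (n : nat) (theta : nat -> nat -> R) : Prop :=
  forall i j, (i < n)%nat -> (j < n)%nat -> theta i j = - theta j i.

From Stdlib Require Import Reals Lra Lia ZArith List ClassicalEpsilon FunctionalExtensionality.
From Coquelicot Require Import Coquelicot.
Open Scope R_scope.

(** Write [w(k) = 1 + |k|^2].  The C*-norm dominates the Fourier coefficients, so the symbol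
    estimates for [delta^alpha rho] with [|alpha| <= 2Q] give
    [|rho(xi)_l| w(l)^Q <= C M (1 + |xi|)^m].  With Peetre's inequality
    [w(j)^s <= 2^|s| w(k)^s w(j - k)^|s|] and [Q] large, this bounds the weighted matrix
    [w(j)^(s/2) |rho(k)_(j-k)| w(k)^(-(s+m)/2)] of [P_rho] by [C M prod_i (1 + (j - k)_i^2)^-1],
    a translation kernel whose sums over any finite set of rows or columns are at most [6^n];
    the Schur test then bounds [P_rho : H^(s+m) -> H^(s)].  Uniqueness of the extension and
    linearity in [rho] follow because finitely supported vectors are dense in [H^(s+m)]. *)

Definition lsum {A} (F : list A) (f : A -> R) : R := fold_right (fun x acc => f x + acc) 0 F.

Section ListSums.
Context {A : Type}.
Implicit Types (F G : list A) (f g : A -> R).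

Lemma lsum_nil f : lsum nil f = 0.
Proof. reflexivity. Qed.

Lemma lsum_cons x F f : lsum (x :: F) f = f x + lsum F f.
Proof. reflexivity. Qed.

Lemma lsum_app F G f : lsum (F ++ G) f = lsum F f + lsum G f.
Proof. induction F as [|x F IH]; simpl; [ring | rewrite IH; ring]. Qed.

Lemma lsum_ext F f g : (forall x, In x F -> f x = g x) -> lsum F f = lsum F g.
Proof. induction F as [|x F IH]; simpl; intros H; auto. rewrite H, IH; auto. Qed.

Lemma lsum_le F f g : (forall x, In x F -> f x <= g x) -> lsum F f <= lsum F g.
Proof.
  induction F as [|x F IH]; simpl; intros H; [lra|].
  pose proof (H x (or_introl eq_refl)). pose proof (IH (fun y h => H y (or_intror h))). lra.
Qed.

Lemma lsum_zero F : lsum F (fun _ => 0) = 0.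
Proof. induction F as [|x F IH]; simpl; [|rewrite IH]; ring. Qed.

Lemma lsum_nonneg F f : (forall x, In x F -> 0 <= f x) -> 0 <= lsum F f.
Proof. intros H. rewrite <- (lsum_zero F). apply lsum_le; auto. Qed.

Lemma lsum_scal F f c : lsum F (fun x => c * f x) = c * lsum F f.
Proof. induction F as [|x F IH]; simpl; [ring | rewrite IH; ring]. Qed.

Lemma lsum_plus F f g : lsum F (fun x => f x + g x) = lsum F f + lsum F g.
Proof. induction F as [|x F IH]; simpl; [ring | rewrite IH; ring]. Qed.

Lemma lsum_map {B} (h : B -> A) (F : list B) f : lsum (map h F) f = lsum F (fun y => f (h y)).
Proof. induction F as [|y F IH]; simpl; auto. rewrite IH; auto. Qed.

Lemma lsum_In_le F f x : (forall y, In y F -> 0 <= f y) -> In x F -> f x <= lsum F f.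
Proof.
  induction F as [|y F IH]; simpl; intros H Hx; [contradiction|].
  assert (0 <= f y) by auto. assert (0 <= lsum F f) by (apply lsum_nonneg; auto).
  destruct Hx as [<-|Hx]; [lra|]. assert (f x <= lsum F f) by auto. lra.
Qed.

Lemma lsum_incl F G f : (forall x, In x G -> 0 <= f x) -> NoDup F -> incl F G -> lsum F f <= lsum G f.
Proof.
  revert G. induction F as [|x F IH]; intros G Hf HF HFG; simpl; [apply lsum_nonneg; auto|].
  inversion_clear HF as [|? ? HxF HF'].
  destruct (in_split x G (HFG x (or_introl eq_refl))) as [G1 [G2 ->]].
  assert (lsum F f <= lsum (G1 ++ G2) f).
  { apply IH; auto.
    - intros y hy. apply Hf, in_or_app. apply in_app_or in hy. simpl; tauto.
    - intros y hy. assert (Hy : In y (G1 ++ x :: G2)) by (apply HFG; right; auto).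
      apply in_app_or in Hy. apply in_or_app. destruct Hy as [|[<-|]]; tauto. }
  rewrite lsum_app in *. simpl. lra.
Qed.

Lemma cauchy_schwarz_lsum F f K : (forall x, In x F -> 0 <= K x) ->
  lsum F (fun x => f x * K x) ^ 2 <= lsum F K * lsum F (fun x => f x ^ 2 * K x).
Proof.
  induction F as [|x F IH]; intros HK; [simpl; lra|]. rewrite !lsum_cons.
  assert (HK' : forall y, In y F -> 0 <= K y) by (intros y hy; apply HK; right; auto).
  assert (IH' := IH HK'). assert (Kx := HK x (or_introl eq_refl)).
  assert (hS : 0 <= lsum F K) by (apply lsum_nonneg; auto).
  assert (hB : 0 <= lsum F (fun y => f y ^ 2 * K y)).
  { apply lsum_nonneg. intros y hy. apply Rmult_le_pos; [apply pow2_ge_0 | auto]. }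
  set (S := lsum F K) in *. set (B := lsum F (fun y => f y ^ 2 * K y)) in *.
  set (X := lsum F (fun y => f y * K y)) in *.
  (* [X^2 <= S B] makes [t |-> S t^2 - 2 X t + B] nonnegative; evaluate it at [t = f x]. *)
  assert (Hq : 0 <= S * f x ^ 2 + B - 2 * f x * X).
  { destruct (Rle_lt_or_eq_dec 0 S hS) as [hpos|hzero].
    - apply (Rmult_le_reg_l S); auto. pose proof (pow2_ge_0 (S * f x - X)). nra.
    - rewrite <- hzero in IH'. assert (X = 0) by nra. rewrite <- hzero. nra. }
  pose proof (Rmult_le_pos _ _ Kx Hq). nra.
Qed.

End ListSums.

Lemma sumR_lsum F f : sumR F f = lsum F f.
Proof. reflexivity. Qed.

Lemma finset_nil n : finset n nil.
Proof. split; constructor. Qed.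

Lemma finset_single n k : validZ n k -> finset n (k :: nil).
Proof. intros hk. split; repeat constructor; auto. Qed.

Lemma finset_In_valid n F k : finset n F -> In k F -> validZ n k.
Proof. intros [_ H] h. eapply Forall_forall in H; eauto. Qed.

Lemma finset_union n F0 F1 : finset n F0 -> finset n F1 ->
  exists F, finset n F /\ incl F0 F /\ incl F1 F.
Proof.
  intros [_ H0] [_ H1].
  pose (dec := fun x y : nat -> Z => excluded_middle_informative (x = y)).
  exists (nodup dec (F0 ++ F1)). repeat split.
  - apply NoDup_nodup.
  - apply Forall_forall. intros x hx. apply nodup_In, in_app_or in hx.
    destruct hx; [eapply Forall_forall in H0 | eapply Forall_forall in H1]; eauto.
  - intros x hx; apply nodup_In, in_or_app; auto.
  - intros x hx; apply nodup_In, in_or_app; auto.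
Qed.

Lemma eq_of_Rabs_lt x y : (forall e, 0 < e -> Rabs (x - y) < e) -> x = y.
Proof.
  intros H. destruct (Req_dec x y) as [|Hne]; auto.
  assert (Hd : 0 < Rabs (x - y)) by (apply Rabs_pos_lt; lra).
  specialize (H _ Hd). lra.
Qed.

Lemma has_sumR_unique n f S1 S2 : has_sumR n f S1 -> has_sumR n f S2 -> S1 = S2.
Proof.
  intros H1 H2. apply eq_of_Rabs_lt. intros e he.
  destruct (H1 (e / 2)) as [F1 [HF1 A1]]; [lra|]. destruct (H2 (e / 2)) as [F2 [HF2 A2]]; [lra|].
  destruct (finset_union n F1 F2 HF1 HF2) as [F [HF [I1 I2]]].
  specialize (A1 F HF I1). specialize (A2 F HF I2).
  apply Rabs_def2 in A1. apply Rabs_def2 in A2. apply Rabs_def1; lra.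
Qed.

Lemma zsumR_eq n f S : has_sumR n f S -> zsumR n f = S.
Proof. intros H. apply (has_sumR_unique n f); auto. unfold zsumR. apply epsilon_spec. eauto. Qed.

Lemma has_sumR_ext n f g S : (forall k, validZ n k -> f k = g k) -> has_sumR n f S -> has_sumR n g S.
Proof.
  intros Hfg H e he. destruct (H e he) as [F0 [HF0 A]]. exists F0; split; auto.
  intros F HF HI. rewrite sumR_lsum, <- (lsum_ext F f g); [apply A; auto|].
  intros k hk; apply Hfg; eapply finset_In_valid; eauto.
Qed.

Lemma has_sumR_partial n f S F : (forall k, validZ n k -> 0 <= f k) ->
  has_sumR n f S -> finset n F -> sumR F f <= S.
Proof.
  intros Hf H HF. apply Rnot_lt_le; intro Hlt.
  destruct (H (sumR F f - S)) as [F0 [HF0 A]]; [lra|].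
  destruct (finset_union n F0 F HF0 HF) as [G [HG [I0 I]]].
  assert (sumR F f <= sumR G f).
  { apply lsum_incl; auto; [|apply HF]. intros k hk; apply Hf; eapply finset_In_valid; eauto. }
  specialize (A G HG I0). apply Rabs_def2 in A. lra.
Qed.

Lemma has_sumR_nonneg n f S : (forall k, validZ n k -> 0 <= f k) -> has_sumR n f S -> 0 <= S.
Proof. intros Hf H. exact (has_sumR_partial n f S nil Hf H (finset_nil n)). Qed.

Lemma has_sumR_le n f S B : has_sumR n f S -> (forall F, finset n F -> sumR F f <= B) -> S <= B.
Proof.
  intros H HB. apply Rnot_lt_le; intro Hlt.
  destruct (H (S - B)) as [F0 [HF0 A]]; [lra|].
  specialize (A F0 HF0 (incl_refl _)). specialize (HB F0 HF0). apply Rabs_def2 in A. lra.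
Qed.

(* The sum is the supremum of the partial sums. *)
Lemma has_sumR_of_bounded n f B : (forall k, validZ n k -> 0 <= f k) ->
  (forall F, finset n F -> sumR F f <= B) -> exists S, has_sumR n f S.
Proof.
  intros Hf HB.
  set (E := fun x => exists F, finset n F /\ x = sumR F f).
  destruct (completeness E) as [S [Hub Hlub]].
  - exists B. intros x [F [HF ->]]. auto.
  - exists 0, nil. split; [apply finset_nil | reflexivity].
  - exists S. intros e he.
    assert (Hx : exists x, E x /\ S - e < x).
    { apply Classical_Prop.NNPP. intros Hno. assert (is_upper_bound E (S - e)).
      { intros x hx. apply Rnot_lt_le. intros Hlt. apply Hno. eauto. }
      specialize (Hlub _ H). lra. }
    destruct Hx as [x [[F0 [HF0 ->]] hx]]. exists F0; split; auto.
    intros F HF HI. assert (sumR F0 f <= sumR F f).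
    { apply lsum_incl; auto; [|apply HF0]. intros k hk; apply Hf; eapply finset_In_valid; eauto. }
    assert (sumR F f <= S) by (apply Hub; exists F; auto).
    apply Rabs_def1; lra.
Qed.

Lemma has_sumR_lincomb n f g S T a b : has_sumR n f S -> has_sumR n g T ->
  has_sumR n (fun k => a * f k + b * g k) (a * S + b * T).
Proof.
  intros Hf Hg e he. set (c := Rabs a + Rabs b + 1).
  assert (hc : 0 < c) by (unfold c; pose proof (Rabs_pos a); pose proof (Rabs_pos b); lra).
  destruct (Hf (e / c)) as [F1 [HF1 A1]]; [apply Rdiv_lt_0_compat; auto|].
  destruct (Hg (e / c)) as [F2 [HF2 A2]]; [apply Rdiv_lt_0_compat; auto|].
  destruct (finset_union n F1 F2 HF1 HF2) as [F0 [HF0 [I1 I2]]].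
  exists F0; split; auto. intros F HF HI.
  specialize (A1 F HF (incl_tran I1 HI)). specialize (A2 F HF (incl_tran I2 HI)).
  rewrite sumR_lsum in *. rewrite lsum_plus, !lsum_scal.
  replace (a * lsum F f + b * lsum F g - (a * S + b * T))
    with (a * (lsum F f - S) + b * (lsum F g - T)) by ring.
  eapply Rle_lt_trans; [apply Rabs_triang|]. rewrite !Rabs_mult.
  assert (Rabs a * Rabs (lsum F f - S) <= Rabs a * (e / c))
    by (apply Rmult_le_compat_l; [apply Rabs_pos | lra]).
  assert (Rabs b * Rabs (lsum F g - T) <= Rabs b * (e / c))
    by (apply Rmult_le_compat_l; [apply Rabs_pos | lra]).
  assert ((Rabs a + Rabs b) * (e / c) < e).
  { apply (Rmult_lt_reg_r c); auto.
    replace ((Rabs a + Rabs b) * (e / c) * c) with ((Rabs a + Rabs b) * e) by (field; lra).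
    unfold c. lra. }
  lra.
Qed.

Lemma has_sumR_zero n : has_sumR n (fun _ => 0) 0.
Proof.
  intros e he. exists nil; split; [apply finset_nil|]. intros F _ _.
  rewrite sumR_lsum, lsum_zero, Rminus_0_r, Rabs_R0; auto.
Qed.

Lemma has_sumR_lsum {A} n (G : list A) (g : A -> (nat -> Z) -> R) (Y : A -> R) :
  (forall j, In j G -> has_sumR n (g j) (Y j)) ->
  has_sumR n (fun k => lsum G (fun j => g j k)) (lsum G Y).
Proof.
  induction G as [|j G IH]; intros H; [apply has_sumR_zero|].
  rewrite lsum_cons. replace (Y j + lsum G Y) with (1 * Y j + 1 * lsum G Y) by ring.
  apply (has_sumR_ext n (fun k => 1 * g j k + 1 * lsum G (fun j => g j k))).
  - intros k _. rewrite lsum_cons. ring.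
  - apply has_sumR_lincomb; [apply H; left | apply IH; intros; apply H; right]; auto.
Qed.

(* Split [f] into its positive and negative parts. *)
Lemma has_sumR_of_abs_bounded n f B :
  (forall F, finset n F -> sumR F (fun k => Rabs (f k)) <= B) -> exists S, has_sumR n f S.
Proof.
  intros HB.
  assert (Hpart : forall h : (nat -> Z) -> R, (forall k, 0 <= h k <= Rabs (f k)) ->
            exists S, has_sumR n h S).
  { intros h Hh. apply (has_sumR_of_bounded n h B); [intros; apply Hh|].
    intros F HF. eapply Rle_trans; [|apply (HB F HF)]. apply lsum_le. intros; apply Hh. }
  destruct (Hpart (fun k => Rmax (f k) 0)) as [S1 H1].
  { intros k. split; [apply Rmax_r|]. unfold Rmax; destruct Rle_dec; [apply Rabs_pos | apply RRle_abs]. }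
  destruct (Hpart (fun k => Rmax (- f k) 0)) as [S2 H2].
  { intros k. split; [apply Rmax_r|]. rewrite <- Rabs_Ropp.
    unfold Rmax; destruct Rle_dec; [apply Rabs_pos | apply RRle_abs]. }
  exists (1 * S1 + (-1) * S2). eapply has_sumR_ext; [|apply has_sumR_lincomb; eauto].
  intros k _. unfold Rmax; repeat destruct Rle_dec; lra.
Qed.

Lemma fst_sumC F f : fst (sumC F f) = sumR F (fun k => fst (f k)).
Proof. induction F as [|k F IH]; simpl; auto. rewrite IH; auto. Qed.

Lemma snd_sumC F f : snd (sumC F f) = sumR F (fun k => snd (f k)).
Proof. induction F as [|k F IH]; simpl; auto. rewrite IH; auto. Qed.

Lemma has_sumC_fst n f S : has_sumC n f S -> has_sumR n (fun k => fst (f k)) (fst S).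
Proof.
  intros H e he. destruct (H e he) as [F0 [HF0 A]]. exists F0; split; auto.
  intros F HF HI. eapply Rle_lt_trans; [|apply (A F HF HI)].
  rewrite <- fst_sumC. change (fst (sumC F f) - fst S) with (Re (Cminus (sumC F f) S)).
  apply re_le_Cmod.
Qed.

Lemma has_sumC_snd n f S : has_sumC n f S -> has_sumR n (fun k => snd (f k)) (snd S).
Proof.
  intros H e he. destruct (H e he) as [F0 [HF0 A]]. exists F0; split; auto.
  intros F HF HI. eapply Rle_lt_trans; [|apply (A F HF HI)].
  rewrite <- snd_sumC. change (snd (sumC F f) - snd S) with (snd (Cminus (sumC F f) S)).
  eapply Rle_trans; [apply Rmax_r | apply Rmax_Cmod].
Qed.

Lemma has_sumC_unique n f S1 S2 : has_sumC n f S1 -> has_sumC n f S2 -> S1 = S2.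
Proof.
  intros H1 H2. apply injective_projections.
  - exact (has_sumR_unique n _ _ _ (has_sumC_fst n f S1 H1) (has_sumC_fst n f S2 H2)).
  - exact (has_sumR_unique n _ _ _ (has_sumC_snd n f S1 H1) (has_sumC_snd n f S2 H2)).
Qed.

Lemma zsumC_eq n f S : has_sumC n f S -> zsumC n f = S.
Proof. intros H. apply (has_sumC_unique n f); auto. unfold zsumC. apply epsilon_spec. eauto. Qed.

Lemma Cmod_le_Rabs_fst_snd (z : C) : Cmod z <= Rabs (fst z) + Rabs (snd z).
Proof.
  destruct z as [x y]. unfold Cmod; cbn [fst snd].
  pose proof (Rabs_pos x); pose proof (Rabs_pos y).
  rewrite <- (sqrt_pow2 (Rabs x + Rabs y)) by lra.
  apply sqrt_le_1_alt. rewrite <- (pow2_abs x), <- (pow2_abs y). nra.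
Qed.

Lemma has_sumC_pair n f a b : has_sumR n (fun k => fst (f k)) a -> has_sumR n (fun k => snd (f k)) b ->
  has_sumC n f (a, b).
Proof.
  intros Ha Hb e he.
  destruct (Ha (e / 2)) as [F1 [HF1 A1]]; [lra|]. destruct (Hb (e / 2)) as [F2 [HF2 A2]]; [lra|].
  destruct (finset_union n F1 F2 HF1 HF2) as [F0 [HF0 [I1 I2]]].
  exists F0; split; auto. intros F HF HI.
  specialize (A1 F HF (incl_tran I1 HI)). specialize (A2 F HF (incl_tran I2 HI)).
  eapply Rle_lt_trans; [apply Cmod_le_Rabs_fst_snd|].
  replace (fst (Cminus (sumC F f) (a, b))) with (sumR F (fun k => fst (f k)) - a)
    by (rewrite <- fst_sumC; simpl; ring).
  replace (snd (Cminus (sumC F f) (a, b))) with (sumR F (fun k => snd (f k)) - b)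
    by (rewrite <- snd_sumC; simpl; ring).
  lra.
Qed.

Lemma has_sumC_of_abs_bounded n f B :
  (forall F, finset n F -> sumR F (fun k => Cmod (f k)) <= B) -> exists S, has_sumC n f S.
Proof.
  intros HB.
  destruct (has_sumR_of_abs_bounded n (fun k => fst (f k)) B) as [a Ha].
  { intros F HF. eapply Rle_trans; [|apply (HB F HF)]. apply lsum_le; intros; apply re_le_Cmod. }
  destruct (has_sumR_of_abs_bounded n (fun k => snd (f k)) B) as [b Hb].
  { intros F HF. eapply Rle_trans; [|apply (HB F HF)].
    apply lsum_le; intros; eapply Rle_trans; [apply Rmax_r | apply Rmax_Cmod]. }
  exists (a, b). apply has_sumC_pair; auto.
Qed.

Lemma Cmod_sumC_le F f : Cmod (sumC F f) <= sumR F (fun k => Cmod (f k)).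
Proof.
  induction F as [|k F IH]; simpl; [rewrite Cmod_0; lra|].
  eapply Rle_trans; [apply Cmod_triangle | lra].
Qed.

Lemma Cmod_has_sumC_le n f S B : has_sumC n f S ->
  (forall F, finset n F -> sumR F (fun k => Cmod (f k)) <= B) -> Cmod S <= B.
Proof.
  intros H HB. apply Rnot_lt_le; intro Hlt.
  destruct (H (Cmod S - B)) as [F0 [HF0 A]]; [lra|].
  specialize (A F0 HF0 (incl_refl _)). specialize (HB F0 HF0).
  pose proof (Cmod_sumC_le F0 f).
  assert (Cmod S <= Cmod (Cminus (sumC F0 f) S) + Cmod (sumC F0 f)).
  { replace S with (Cplus (Copp (Cminus (sumC F0 f) S)) (sumC F0 f)) at 1 by ring.
    eapply Rle_trans; [apply Cmod_triangle | rewrite Cmod_opp; lra]. }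
  lra.
Qed.

Lemma has_sumC_ext n f g S : (forall k, validZ n k -> f k = g k) -> has_sumC n f S -> has_sumC n g S.
Proof.
  intros Hfg H e he. destruct (H e he) as [F0 [HF0 A]]. exists F0; split; auto.
  intros F HF HI. replace (sumC F g) with (sumC F f); auto.
  assert (HFv : forall k, In k F -> validZ n k) by (intros; eapply finset_In_valid; eauto).
  clear - Hfg HFv. induction F as [|k F IH]; simpl; auto.
  rewrite Hfg, IH; auto. intros; apply HFv; right; auto. apply HFv; left; auto.
Qed.

Lemma has_sumC_lincomb n f g S T (a b : C) : has_sumC n f S -> has_sumC n g T ->
  has_sumC n (fun k => Cplus (Cmult a (f k)) (Cmult b (g k))) (Cplus (Cmult a S) (Cmult b T)).
Proof.
  intros Hf Hg.
  pose proof (has_sumC_fst n f S Hf) as f1. pose proof (has_sumC_snd n f S Hf) as f2.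
  pose proof (has_sumC_fst n g T Hg) as g1. pose proof (has_sumC_snd n g T Hg) as g2.
  rewrite (surjective_pairing (Cplus _ _)). apply has_sumC_pair.
  - apply (has_sumR_ext n (fun k => 1 * (fst a * fst (f k) + (- snd a) * snd (f k))
                                   + 1 * (fst b * fst (g k) + (- snd b) * snd (g k)))).
    { intros k _. simpl. ring. }
    replace (fst (Cplus (Cmult a S) (Cmult b T)))
      with (1 * (fst a * fst S + (- snd a) * snd S) + 1 * (fst b * fst T + (- snd b) * snd T))
      by (simpl; ring).
    repeat apply has_sumR_lincomb; auto.
  - apply (has_sumR_ext n (fun k => 1 * (fst a * snd (f k) + snd a * fst (f k))
                                   + 1 * (fst b * snd (g k) + snd b * fst (g k)))).
    { intros k _. simpl. ring. }
    replace (snd (Cplus (Cmult a S) (Cmult b T)))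
      with (1 * (fst a * snd S + snd a * fst S) + 1 * (fst b * snd T + snd b * fst T))
      by (simpl; ring).
    repeat apply has_sumR_lincomb; auto.
Qed.

Lemma isum_S n f : isum (S n) f = isum n f + f n.
Proof.
  unfold isum. rewrite seq_S, fold_right_app. simpl.
  generalize (f n). induction (seq 0 n) as [|i l IH]; intros; simpl; [ring | rewrite IH; ring].
Qed.

Lemma iprod_S n f : iprod (S n) f = iprod n f * f n.
Proof.
  unfold iprod. rewrite seq_S, fold_right_app. simpl.
  generalize (f n). induction (seq 0 n) as [|i l IH]; intros; simpl; [ring | rewrite IH; ring].
Qed.

Lemma isum_ext n f g : (forall i, (i < n)%nat -> f i = g i) -> isum n f = isum n g.
Proof. intros H. apply lsum_ext. intros i hi. apply in_seq in hi. apply H. lia. Qed.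

Lemma iprod_ext n f g : (forall i, (i < n)%nat -> f i = g i) -> iprod n f = iprod n g.
Proof. induction n; intros H; auto. rewrite !iprod_S, IHn, H; auto. Qed.

Lemma isum_le n f g : (forall i, (i < n)%nat -> f i <= g i) -> isum n f <= isum n g.
Proof. intros H. apply lsum_le. intros i hi. apply in_seq in hi. apply H. lia. Qed.

Lemma isum_const n c : isum n (fun _ => c) = INR n * c.
Proof. induction n; [unfold isum; simpl; ring|]. rewrite isum_S, IHn, S_INR. ring. Qed.

Lemma isum_nonneg n f : (forall i, (i < n)%nat -> 0 <= f i) -> 0 <= isum n f.
Proof. intros H. apply lsum_nonneg. intros i hi. apply in_seq in hi. apply H. lia. Qed.

Lemma isum_scal n f c : isum n (fun i => c * f i) = c * isum n f.
Proof. exact (lsum_scal (seq 0 n) f c). Qed.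

Lemma isum_plus n f g : isum n (fun i => f i + g i) = isum n f + isum n g.
Proof. exact (lsum_plus (seq 0 n) f g). Qed.

Lemma isum_term_le n f i : (forall i, (i < n)%nat -> 0 <= f i) -> (i < n)%nat -> f i <= isum n f.
Proof.
  intros H hi. apply (lsum_In_le (seq 0 n)); [|apply in_seq; lia].
  intros j hj. apply in_seq in hj. apply H. lia.
Qed.

Lemma iprod_const n c : iprod n (fun _ => c) = c ^ n.
Proof. induction n; auto. rewrite iprod_S, IHn. simpl; ring. Qed.

Lemma iprod_le n f g : (forall i, (i < n)%nat -> 0 <= f i <= g i) -> iprod n f <= iprod n g.
Proof.
  intros H. assert (Hpos : forall k, (k <= n)%nat -> 0 <= iprod k f /\ iprod k f <= iprod k g).
  { induction k; intros hk; [unfold iprod; simpl; lra|]. rewrite !iprod_S.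
    destruct (IHk ltac:(lia)). destruct (H k ltac:(lia)). split; [nra|].
    apply Rmult_le_compat; auto; lra. }
  apply Hpos; lia.
Qed.

Lemma iprod_ge1 n f : (forall i, (i < n)%nat -> 1 <= f i) -> 1 <= iprod n f.
Proof.
  intros H. rewrite <- (pow1 n), <- iprod_const. apply iprod_le. intros i hi. specialize (H i hi). lra.
Qed.

(** * The lattice kernel [prod_i 1 / (1 + l_i^2)] *)

Definition pbracket (n : nat) (l : nat -> Z) : R := iprod n (fun i => 1 + IZR (l i) ^ 2).
Definition kernel (n : nat) (l : nat -> Z) : R := / pbracket n l.

Lemma pbracket_ge1 n l : 1 <= pbracket n l.
Proof. apply iprod_ge1. intros i _. pose proof (pow2_ge_0 (IZR (l i))). lra. Qed.

Lemma kernel_pos n l : 0 < kernel n l.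
Proof. unfold kernel. pose proof (pbracket_ge1 n l). apply Rinv_0_lt_compat. lra. Qed.

Lemma kernel_le1 n l : kernel n l <= 1.
Proof. unfold kernel. rewrite <- Rinv_1. apply Rinv_le_contravar; [lra | apply pbracket_ge1]. Qed.

Lemma kernel_S n l : kernel (S n) l = kernel n l * / (1 + IZR (l n) ^ 2).
Proof. unfold kernel, pbracket. rewrite iprod_S, Rinv_mult. reflexivity. Qed.

Lemma sum_inv_sq_nat N : lsum (seq 0 (S N)) (fun i => / (1 + INR i ^ 2)) <= 3 - 2 / (INR N + 1).
Proof.
  induction N.
  - simpl. replace (/ (1 + 0 * (0 * 1))) with 1 by field. lra.
  - rewrite seq_S, lsum_app. cbn [lsum fold_right]. rewrite Nat.add_0_l, !S_INR.
    pose proof (pos_INR N).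
    (* telescoping: 1 / (1 + i^2) <= 2 / i - 2 / (i + 1) *)
    assert (/ (1 + (INR N + 1) ^ 2) <= 2 / (INR N + 1) - 2 / (INR N + 1 + 1)).
    { replace (2 / (INR N + 1) - 2 / (INR N + 1 + 1))
        with (/ ((INR N + 1) * (INR N + 1 + 1) / 2)) by (field; lra).
      apply Rinv_le_contravar; nra. }
    lra.
Qed.

Definition zrange (N : nat) : list Z :=
  map Z.of_nat (seq 0 (S N)) ++ map (fun i => (- Z.of_nat (S i))%Z) (seq 0 N).

Lemma lsum_zrange_le N : lsum (zrange N) (fun z => / (1 + IZR z ^ 2)) <= 6.
Proof.
  assert (Hnat : forall M, lsum (seq 0 M) (fun i => / (1 + INR i ^ 2)) <= 3).
  { intros [|M]; [simpl; lra|]. pose proof (sum_inv_sq_nat M). pose proof (pos_INR M).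
    assert (0 < 2 / (INR M + 1)) by (apply Rdiv_lt_0_compat; lra). lra. }
  unfold zrange. rewrite lsum_app, !lsum_map.
  rewrite (lsum_ext _ _ (fun i => / (1 + INR i ^ 2))) by (intros; rewrite <- INR_IZR_INZ; auto).
  rewrite (lsum_ext _ (fun i => / (1 + IZR (- Z.of_nat (S i)) ^ 2)) (fun i => / (1 + INR (S i) ^ 2)))
    by (intros; rewrite opp_IZR, <- INR_IZR_INZ; f_equal; ring).
  rewrite <- (lsum_map S (seq 0 N) (fun i => / (1 + INR i ^ 2))), seq_shift.
  pose proof (Hnat (S N)) as H0. pose proof (Hnat (S N)) as H1.
  change (seq 0 (S N)) with (0%nat :: seq 1 N) in H1. rewrite lsum_cons in H1.
  assert (0 < / (1 + INR 0 ^ 2)) by (apply Rinv_0_lt_compat; simpl; lra).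
  lra.
Qed.

Lemma In_zrange N z : (Z.abs_nat z <= N)%nat -> In z (zrange N).
Proof.
  intros H. unfold zrange. apply in_or_app. destruct (Z_le_gt_dec 0 z).
  - left. apply in_map_iff. exists (Z.to_nat z). split; [apply Z2Nat.id; auto | apply in_seq; lia].
  - right. apply in_map_iff. exists (Z.to_nat (- z) - 1)%nat. split; [lia | apply in_seq; lia].
Qed.

Lemma lsum_inv_sq_Z_le (zs : list Z) : NoDup zs -> lsum zs (fun z => / (1 + IZR z ^ 2)) <= 6.
Proof.
  intros Hzs. set (N := fold_right (fun z acc => Z.abs_nat z + acc)%nat 0%nat zs).
  eapply Rle_trans; [|apply (lsum_zrange_le N)]. apply lsum_incl; auto.
  - intros z _. apply Rlt_le, Rinv_0_lt_compat. pose proof (pow2_ge_0 (IZR z)). lra.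
  - intros z hz. apply In_zrange. unfold N. clear N Hzs.
    induction zs as [|z' zs IH]; simpl in *; [contradiction|].
    destruct hz as [->|hz]; [lia | specialize (IH hz); lia].
Qed.

Lemma lsum_indicator (zs : list Z) z0 c : NoDup zs -> In z0 zs ->
  lsum zs (fun z => if Z.eqb z0 z then c else 0) = c.
Proof.
  induction zs as [|z zs IH]; intros Hzs Hin; [contradiction|]. inversion_clear Hzs as [|? ? Hz Hzs'].
  rewrite lsum_cons. destruct (Z.eqb_spec z0 z) as [->|Hne].
  - rewrite (lsum_ext zs _ (fun _ => 0)), lsum_zero; [ring|].
    intros z' hz'. destruct (Z.eqb_spec z z'); [subst; contradiction | auto].
  - destruct Hin as [->|Hin]; [congruence|]. rewrite IH; auto. ring.
Qed.

Lemma lsum_partition {A} (F : list A) (key : A -> Z) (zs : list Z) f : NoDup zs ->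
  (forall x, In x F -> In (key x) zs) ->
  lsum F f = lsum zs (fun z => lsum (filter (fun x => Z.eqb (key x) z) F) f).
Proof.
  intros Hzs. induction F as [|x F IH]; intros Hkey.
  - symmetry. exact (lsum_zero zs).
  - rewrite (lsum_ext zs _ (fun z => (if Z.eqb (key x) z then f x else 0)
                                    + lsum (filter (fun x => Z.eqb (key x) z) F) f)).
    + rewrite lsum_plus, lsum_indicator, lsum_cons, IH; auto.
      intros y hy; apply Hkey; right; auto. apply Hkey; left; auto.
    + intros z _. simpl. destruct (Z.eqb (key x) z); rewrite ?lsum_cons; ring.
Qed.

Definition restrict (n : nat) (l : nat -> Z) : nat -> Z := fun i => if Nat.ltb i n then l i else 0%Z.

Lemma kernel_restrict n l : kernel n (restrict n l) = kernel n l.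
Proof.
  unfold kernel, pbracket. f_equal. apply iprod_ext. intros i hi. unfold restrict.
  destruct (Nat.ltb_spec i n); [auto | lia].
Qed.

Lemma finset_slice n F z : finset (S n) F ->
  finset n (map (restrict n) (filter (fun x => Z.eqb (x n) z) F)).
Proof.
  intros [HF Hv].
  assert (Hval : forall x, In x F -> validZ (S n) x) by (intros; eapply Forall_forall; eauto).
  split.
  - apply NoDup_map_NoDup_ForallPairs; [|apply NoDup_filter; auto].
    intros x y hx hy hxy. apply filter_In in hx as [hx hxz]. apply filter_In in hy as [hy hyz].
    apply Z.eqb_eq in hxz, hyz. apply functional_extensionality. intros i.
    pose proof (equal_f hxy i) as hi. unfold restrict in hi.
    destruct (Nat.ltb_spec i n); auto. destruct (Nat.eq_dec i n) as [->|]; [congruence|].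
    rewrite (Hval x hx i), (Hval y hy i) by lia. reflexivity.
  - apply Forall_forall. intros x hx. apply in_map_iff in hx. destruct hx as [y [<- _]].
    intros i hi. unfold restrict. destruct (Nat.ltb_spec i n); auto; lia.
Qed.

(* Slicing along the last coordinate reduces to dimension [n] and the one-dimensional bound. *)
Lemma lsum_kernel_le n F : finset n F -> lsum F (kernel n) <= 6 ^ n.
Proof.
  revert F. induction n as [|n IH]; intros F HF.
  - destruct HF as [HF Hv].
    assert (Hzero : forall x, In x F -> x = fun _ => 0%Z).
    { intros x hx. eapply Forall_forall in Hv; eauto.
      apply functional_extensionality; intros i. apply Hv. lia. }
    destruct F as [|x [|y F]].
    + simpl; lra.
    + rewrite lsum_cons. unfold kernel, pbracket, iprod. simpl. rewrite Rinv_1. lra.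
    + exfalso. inversion_clear HF as [|? ? Hx _]. apply Hx. left.
      rewrite (Hzero x), (Hzero y); simpl; auto.
  - set (zs := nodup Z.eq_dec (map (fun x => x n) F)).
    rewrite (lsum_partition F (fun x => x n) zs).
    2: apply NoDup_nodup.
    2: intros x hx; apply nodup_In, (in_map (fun x => x n)); auto.
    apply Rle_trans with (lsum zs (fun z => 6 ^ n * / (1 + IZR z ^ 2))).
    + apply lsum_le. intros z _.
      rewrite (lsum_ext _ _ (fun x => / (1 + IZR z ^ 2) * kernel n (restrict n x))).
      2: { intros x hx. apply filter_In in hx as [_ hx]. apply Z.eqb_eq in hx.
           rewrite kernel_S, kernel_restrict, hx. ring. }
      rewrite lsum_scal, Rmult_comm. apply Rmult_le_compat_r.
      { apply Rlt_le, Rinv_0_lt_compat. pose proof (pow2_ge_0 (IZR z)). lra. }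
      rewrite <- (lsum_map (restrict n)). apply IH, finset_slice; auto.
    + rewrite lsum_scal. change (6 ^ S n) with (6 * 6 ^ n).
      pose proof (lsum_inv_sq_Z_le zs (NoDup_nodup _ _)). pose proof (pow_le 6 n ltac:(lra)). nra.
Qed.

Lemma lsum_kernel_comp_le n F (g : (nat -> Z) -> nat -> Z) : finset n F ->
  (forall x y, g x = g y -> x = y) -> (forall x, validZ n x -> validZ n (g x)) ->
  lsum F (fun x => kernel n (g x)) <= 6 ^ n.
Proof.
  intros [HF Hv] Hinj Hval. rewrite <- (lsum_map g). apply lsum_kernel_le. split.
  - apply NoDup_map_NoDup_ForallPairs; auto. intros x y _ _. apply Hinj.
  - apply Forall_forall. intros x hx. apply in_map_iff in hx. destruct hx as [y [<- hy]].
    apply Hval. eapply Forall_forall in Hv; eauto.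
Qed.

Lemma subZ_valid n j k : validZ n j -> validZ n k -> validZ n (subZ j k).
Proof. intros hj hk i hi. unfold subZ. rewrite hj, hk; auto. Qed.

Lemma lsum_kernel_translate_le n F k : finset n F -> validZ n k ->
  lsum F (fun j => kernel n (subZ j k)) <= 6 ^ n.
Proof.
  intros HF hk. apply lsum_kernel_comp_le; auto; [|intros; apply subZ_valid; auto].
  intros x y h. apply functional_extensionality; intros i.
  pose proof (equal_f h i). unfold subZ in *. lia.
Qed.

Lemma lsum_kernel_reflect_le n F j : finset n F -> validZ n j ->
  lsum F (fun k => kernel n (subZ j k)) <= 6 ^ n.
Proof.
  intros HF hj. apply lsum_kernel_comp_le; auto; [|intros; apply subZ_valid; auto].
  intros x y h. apply functional_extensionality; intros i.
  pose proof (equal_f h i). unfold subZ in *. lia.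
Qed.

Definition bracket (n : nat) (k : nat -> Z) : R := 1 + normZ n k ^ 2.

Lemma normZ_sq n k : normZ n k ^ 2 = isum n (fun i => IZR (k i) ^ 2).
Proof. unfold normZ. apply pow2_sqrt, isum_nonneg. intros; apply pow2_ge_0. Qed.

Lemma bracket_ge1 n k : 1 <= bracket n k.
Proof. unfold bracket. pose proof (pow2_ge_0 (normZ n k)). lra. Qed.

Lemma Rpower_pos x y : 0 < Rpower x y.
Proof. apply exp_pos. Qed.

Lemma Rpower_1_l y : Rpower 1 y = 1.
Proof. unfold Rpower. rewrite ln_1, Rmult_0_r. apply exp_0. Qed.

Lemma Rpower_peetre A B C s : 0 < A -> 0 < B -> 0 < C -> A <= 2 * B * C -> B <= 2 * A * C ->
  Rpower A s <= Rpower 2 (Rabs s) * Rpower B s * Rpower C (Rabs s).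
Proof.
  intros hA hB hC h1 h2. destruct (Rle_dec 0 s) as [hs|hs].
  - rewrite Rabs_right by lra. rewrite !Rpower_mult_distr by nra. apply Rle_Rpower_l; lra.
  - rewrite Rabs_left by lra. set (t := - s). replace s with (- t) by (unfold t; ring).
    rewrite !Rpower_Ropp.
    assert (Rpower B t <= Rpower 2 t * Rpower A t * Rpower C t).
    { rewrite !Rpower_mult_distr by nra. apply Rle_Rpower_l; unfold t; lra. }
    pose proof (Rpower_pos A t). pose proof (Rpower_pos B t).
    apply (Rmult_le_reg_r (Rpower A t * Rpower B t)); [nra|].
    replace (/ Rpower A t * (Rpower A t * Rpower B t)) with (Rpower B t) by (field; lra).
    replace (Rpower 2 t * / Rpower B t * Rpower C t * (Rpower A t * Rpower B t))
      with (Rpower 2 t * Rpower A t * Rpower C t) by (field; lra).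
    auto.
Qed.

Lemma bracket_peetre n j k :
  bracket n j <= 2 * bracket n k * bracket n (subZ j k) /\
  bracket n k <= 2 * bracket n j * bracket n (subZ j k).
Proof.
  unfold bracket. rewrite !normZ_sq.
  set (a := isum n (fun i => IZR (k i) ^ 2)). set (b := isum n (fun i => IZR (subZ j k i) ^ 2)).
  set (c := isum n (fun i => IZR (j i) ^ 2)).
  assert (0 <= a) by (apply isum_nonneg; intros; apply pow2_ge_0).
  assert (0 <= b) by (apply isum_nonneg; intros; apply pow2_ge_0).
  assert (0 <= c) by (apply isum_nonneg; intros; apply pow2_ge_0).
  assert (c <= 2 * a + 2 * b).
  { unfold a, b, c. rewrite <- !isum_scal, <- isum_plus. apply isum_le. intros i _.
    unfold subZ. rewrite minus_IZR. pose proof (pow2_ge_0 (2 * IZR (k i) - IZR (j i))). nra. }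
  assert (a <= 2 * c + 2 * b).
  { unfold a, b, c. rewrite <- !isum_scal, <- isum_plus. apply isum_le. intros i _.
    unfold subZ. rewrite minus_IZR. pose proof (pow2_ge_0 (2 * IZR (j i) - IZR (k i))). nra. }
  split; nra.
Qed.

Lemma Rpower_one_plus_sq_le r m : 0 <= r ->
  Rpower (1 + r) m ^ 2 <= Rpower 2 (Rabs m) * Rpower (1 + r ^ 2) m.
Proof.
  intros hr.
  replace (Rpower (1 + r) m ^ 2) with (Rpower ((1 + r) ^ 2) m).
  - pose proof (Rpower_peetre ((1 + r) ^ 2) (1 + r ^ 2) 1 m) as H.
    rewrite Rpower_1_l in H. pose proof (pow2_ge_0 (1 - r)).
    assert (Rpower ((1 + r) ^ 2) m <= Rpower 2 (Rabs m) * Rpower (1 + r ^ 2) m * 1) by (apply H; nra).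
    lra.
  - rewrite <- (Rpower_pow 2 (1 + r)) by lra. rewrite Rpower_mult. simpl (INR 2).
    replace ((1 + 1) * m) with (m + m) by ring. rewrite Rpower_plus. ring.
Qed.

Fixpoint max_upto (x : nat -> R) (n : nat) : R :=
  match n with O => 1 | S n' => Rmax (max_upto x n') (x n') end.

Lemma one_plus_isum_le_max x n : 1 + isum n x <= INR (S n) * max_upto x n.
Proof.
  induction n; [unfold isum; simpl; lra|]. rewrite isum_S. simpl max_upto.
  pose proof (Rmax_l (max_upto x n) (x n)). pose proof (Rmax_r (max_upto x n) (x n)).
  pose proof (pos_INR (S n)). rewrite (S_INR (S n)). nra.
Qed.

Lemma max_upto_pow_le x n Q : (forall i, 0 <= x i) -> max_upto x n ^ Q <= 1 + isum n (fun i => x i ^ Q).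
Proof.
  intros hx. induction n; [simpl; rewrite pow1; unfold isum; simpl; lra|].
  rewrite isum_S. simpl max_upto. pose proof (pow_le (x n) Q (hx n)).
  assert (0 <= isum n (fun i => x i ^ Q)) by (apply isum_nonneg; intros; apply pow_le; auto).
  unfold Rmax. destruct Rle_dec; lra.
Qed.

Lemma bracket_pow_le n l Q :
  bracket n l ^ Q <= INR (S n) ^ Q * (1 + isum n (fun i => IZR (l i) ^ (2 * Q))).
Proof.
  unfold bracket. rewrite normZ_sq. set (x := fun i => IZR (l i) ^ 2).
  assert (hx : forall i, 0 <= x i) by (intros; apply pow2_ge_0).
  rewrite (isum_ext n (fun i => IZR (l i) ^ (2 * Q)) (fun i => x i ^ Q))
    by (intros; unfold x; rewrite <- pow_mult; auto).
  eapply Rle_trans.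
  - apply pow_incr. split; [|apply one_plus_isum_le_max].
    pose proof (isum_nonneg n x (fun i _ => hx i)). lra.
  - rewrite Rpow_mult_distr.
    apply Rmult_le_compat_l; [apply pow_le, pos_INR | apply max_upto_pow_le; auto].
Qed.

Lemma pbracket_le n l : pbracket n l <= bracket n l ^ n.
Proof.
  unfold pbracket. rewrite <- iprod_const. apply iprod_le. intros i hi. split.
  - pose proof (pow2_ge_0 (IZR (l i))); lra.
  - unfold bracket. rewrite normZ_sq.
    pose proof (isum_term_le n (fun i => IZR (l i) ^ 2) i (fun i _ => pow2_ge_0 _) hi). simpl in *. lra.
Qed.

Lemma pbracket_sq_le n l s Q : Rabs s + 2 * INR n <= 2 * INR Q ->
  Rpower (bracket n l) (Rabs s) * pbracket n l ^ 2 <= bracket n l ^ (2 * Q).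
Proof.
  intros HQ. pose proof (bracket_ge1 n l). pose proof (pbracket_ge1 n l). pose proof (Rabs_pos s).
  assert (HnQ : (2 * n <= 2 * Q)%nat) by (apply INR_le; rewrite !mult_INR; simpl; lra).
  replace (2 * Q)%nat with ((2 * Q - 2 * n) + n * 2)%nat by lia. rewrite pow_add, pow_mult.
  apply Rmult_le_compat.
  - apply Rlt_le, Rpower_pos.
  - apply pow2_ge_0.
  - rewrite <- Rpower_pow by lra. apply Rle_Rpower; auto.
    rewrite minus_INR by auto. rewrite !mult_INR. simpl. lra.
  - apply pow_incr. split; [lra | apply pbracket_le].
Qed.

(** * Decay of the Fourier coefficients of a symbol *)

Definition coef_decay (n Q : nat) (m : R) (rho : Symb) (M : R) : Prop :=
  forall xi l, validR n xi -> validZ n l ->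
    Cmod (rho xi l) * bracket n l ^ Q <= M * Rpower (1 + normR n xi) m.

Lemma coef_decay_nonneg n Q m rho M : coef_decay n Q m rho M -> 0 <= M.
Proof.
  intros H. assert (Hv : validZ n (fun _ => 0%Z)) by (intros i _; auto).
  specialize (H (fun _ => 0) (fun _ => 0%Z) ltac:(intros i _; auto) Hv).
  pose proof (Cmod_ge_0 (rho (fun _ => 0) (fun _ => 0%Z))).
  pose proof (pow_le _ Q (Rle_trans _ _ _ Rle_0_1 (bracket_ge1 n (fun _ => 0%Z)))).
  pose proof (Rpower_pos (1 + normR n (fun _ => 0)) m). nra.
Qed.

Lemma coef_decay_of_moments n Q m rho M :
  (forall xi l, validR n xi -> validZ n l -> Cmod (rho xi l) <= M * Rpower (1 + normR n xi) m) ->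
  (forall i, (i < n)%nat -> forall xi l, validR n xi -> validZ n l ->
     IZR (l i) ^ (2 * Q) * Cmod (rho xi l) <= M * Rpower (1 + normR n xi) m) ->
  coef_decay n Q m rho (INR (S n) ^ S Q * M).
Proof.
  intros H0 H1 xi l hxi hl. specialize (H0 xi l hxi hl).
  set (X := M * Rpower (1 + normR n xi) m) in *. set (r := Cmod (rho xi l)) in *.
  assert (0 <= r) by apply Cmod_ge_0.
  assert (Hsum : isum n (fun i => IZR (l i) ^ (2 * Q)) * r <= INR n * X).
  { rewrite Rmult_comm, <- isum_scal, <- isum_const. apply isum_le. intros i hi.
    rewrite Rmult_comm. apply H1; auto. }
  assert (0 <= INR (S n) ^ Q) by (apply pow_le, pos_INR).
  eapply Rle_trans; [apply Rmult_le_compat_l; [auto | apply bracket_pow_le]|].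
  replace (INR (S n) ^ S Q * M * Rpower (1 + normR n xi) m) with (INR (S n) ^ Q * (X + INR n * X))
    by (unfold X; rewrite S_INR; simpl pow; ring).
  replace (r * (INR (S n) ^ Q * (1 + isum n (fun i => IZR (l i) ^ (2 * Q)))))
    with (INR (S n) ^ Q * (r + isum n (fun i => IZR (l i) ^ (2 * Q)) * r)) by ring.
  apply Rmult_le_compat_l; auto. lra.
Qed.

Lemma Cmod_cocycle n theta l j : Cmod (cocycle n theta l j) = 1.
Proof.
  unfold cocycle, Cmod. cbn [fst snd]. rewrite <- sqrt_1. f_equal.
  rewrite Rplus_comm, <- !Rsqr_pow2. apply sin2_cos2.
Qed.

(* In the regular representation, the [l]-th entry of [u delta_0] is [u_l] up to a phase. *)
Lemma Cmod_le_cstar n theta u c l : cstar_le n theta u c -> validZ n l -> Cmod (u l) <= c.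
Proof.
  intros [hc H] hl. set (z := fun _ : nat => 0%Z).
  specialize (H (z :: nil) (fun _ => RtoC 1) (finset_single n z ltac:(intros i _; auto))
                (l :: nil) (finset_single n l hl)).
  unfold sumR, lreg, sumC in H. cbn [fold_right] in H.
  replace (subZ l z) with l in H by (apply functional_extensionality; intros i; unfold subZ, z; lia).
  replace (Cplus (Cmult (Cmult (u l) (cocycle n theta l z)) (RtoC 1)) (RtoC 0))
    with (Cmult (u l) (cocycle n theta l z)) in H by ring.
  rewrite Cmod_mult, Cmod_cocycle, Cmod_R, Rabs_R1 in H.
  pose proof (Cmod_ge_0 (u l)). nra.
Qed.

Definition axis_index (i p : nat) : nat -> nat := fun i' => if Nat.eqb i' i then p else 0%nat.

Lemma validN_zero n : validN n zeroN.
Proof. intros i _; auto. Qed.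

Lemma validN_axis_index n i p : (i < n)%nat -> validN n (axis_index i p).
Proof. intros hi j hj. unfold axis_index. destruct (Nat.eqb_spec j i); auto; lia. Qed.

Lemma mlen_S n a : mlen (S n) a = (mlen n a + a n)%nat.
Proof.
  unfold mlen. rewrite seq_S, fold_right_app. simpl. rewrite Nat.add_0_r.
  generalize (a n). induction (seq 0 n) as [|i l IH]; intros; simpl; [lia | rewrite IH; lia].
Qed.

Lemma mlen_zero n : mlen n zeroN = 0%nat.
Proof. induction n; auto. rewrite mlen_S, IHn. auto. Qed.

Lemma mlen_axis_index_le n i p : (mlen n (axis_index i p) <= p)%nat.
Proof.
  assert (Hlow : forall k, (k <= i)%nat -> mlen k (axis_index i p) = 0%nat).
  { induction k; intros hk; auto. rewrite mlen_S, IHk by lia. unfold axis_index.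
    destruct (Nat.eqb_spec k i); lia. }
  induction n; [unfold mlen; simpl; lia|]. rewrite mlen_S. unfold axis_index at 2.
  destruct (Nat.eqb_spec n i) as [->|]; [rewrite Hlow; lia | lia].
Qed.

Lemma kpow_zero n l : kpow n zeroN l = 1.
Proof. unfold kpow. rewrite (iprod_ext n _ (fun _ => 1)), iprod_const, pow1; auto. Qed.

Lemma kpow_axis_index n i p l : (i < n)%nat -> kpow n (axis_index i p) l = IZR (l i) ^ p.
Proof.
  intros hi. unfold kpow. induction n; [lia|]. rewrite iprod_S. unfold axis_index at 2.
  destruct (Nat.eqb_spec n i) as [->|].
  - rewrite (iprod_ext i _ (fun _ => 1)), iprod_const, pow1; [ring|].
    intros j hj. unfold axis_index. destruct (Nat.eqb_spec j i); [lia | auto].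
  - rewrite IHn by lia. ring.
Qed.

Lemma moment_le_cstar n theta a u c l : cstar_le n theta (delta n a u) c -> validZ n l ->
  Rabs (kpow n a l) * Cmod (u l) <= c.
Proof.
  intros H hl. pose proof (Cmod_le_cstar n theta _ c l H hl) as Hc.
  unfold delta in Hc. rewrite Cmod_mult, Cmod_R in Hc. auto.
Qed.

Lemma coef_moments_of_cstar n theta Q m rho (c0 c1 : R) :
  (forall xi, validR n xi ->
     cstar_le n theta (delta n zeroN (rho xi)) (c0 * Rpower (1 + normR n xi) m)) ->
  (forall i, (i < n)%nat -> forall xi, validR n xi ->
     cstar_le n theta (delta n (axis_index i (2 * Q)) (rho xi)) (c1 * Rpower (1 + normR n xi) m)) ->
  coef_decay n Q m rho (INR (S n) ^ S Q * Rmax c0 c1).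
Proof.
  intros H0 H1. apply coef_decay_of_moments.
  - intros xi l hxi hl. pose proof (moment_le_cstar _ _ _ _ _ l (H0 xi hxi) hl) as h.
    rewrite kpow_zero, Rabs_R1, Rmult_1_l in h. eapply Rle_trans; [exact h|].
    apply Rmult_le_compat_r; [apply Rlt_le, Rpower_pos | apply Rmax_l].
  - intros i hi xi l hxi hl. pose proof (moment_le_cstar _ _ _ _ _ l (H1 i hi xi hxi) hl) as h.
    rewrite kpow_axis_index, Rabs_right in h
      by (auto; rewrite pow_mult; apply Rle_ge, pow_le, pow2_ge_0).
    eapply Rle_trans; [exact h|].
    apply Rmult_le_compat_r; [apply Rlt_le, Rpower_pos | apply Rmax_r].
Qed.

Lemma coef_decay_of_sym_bound n theta Q m rho D M :
  deriv_family n theta rho D -> sym_bound n theta m D (2 * Q) M ->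
  coef_decay n Q m rho (INR (S n) ^ S Q * M).
Proof.
  intros [<- _] HS. rewrite <- (Rmax_left M M) by lra.
  apply (coef_moments_of_cstar n theta).
  - intros xi hxi. specialize (HS zeroN zeroN (validN_zero n) (validN_zero n)).
    rewrite !mlen_zero, Rminus_0_r in HS. apply HS; auto; lia.
  - intros i hi xi hxi. pose proof (mlen_axis_index_le n i (2 * Q)).
    specialize (HS (axis_index i (2 * Q)) zeroN (validN_axis_index n i _ hi) (validN_zero n)).
    rewrite !mlen_zero, Rminus_0_r in HS. apply HS; auto; lia.
Qed.

Lemma cstar_le_weaken n theta u c c' : cstar_le n theta u c -> c <= c' -> cstar_le n theta u c'.
Proof.
  intros [hc H] hcc. split; [lra|]. intros S xi HS F HF. eapply Rle_trans; [apply H; auto|].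
  apply Rmult_le_compat_r; [apply lsum_nonneg; intros; apply pow2_ge_0 | apply pow_incr; lra].
Qed.

Lemma uniform_bound_fin (P : nat -> R -> Prop) n : (forall i c c', P i c -> c <= c' -> P i c') ->
  (forall i, (i < n)%nat -> exists c, P i c) -> exists c, forall i, (i < n)%nat -> P i c.
Proof.
  intros Hmono. induction n; intros H; [exists 0; intros; lia|].
  destruct IHn as [c Hc]; [intros; apply H; lia|]. destruct (H n ltac:(lia)) as [c' Hc'].
  exists (Rmax c c'). intros i hi. destruct (Nat.eq_dec i n) as [->|].
  - eapply Hmono; eauto; apply Rmax_r.
  - eapply Hmono; [apply Hc; lia | apply Rmax_l].
Qed.

Lemma coef_decay_of_symbol n theta Q m rho : in_symbol n theta m rho -> exists M, coef_decay n Q m rho M.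
Proof.
  intros [D [[<- _] HS]].
  set (P := fun (a : nat -> nat) c => forall xi, validR n xi ->
              cstar_le n theta (delta n a (D zeroN xi)) (c * Rpower (1 + normR n xi) m)).
  assert (Hget : forall a, validN n a -> exists c, P a c).
  { intros a ha. destruct (HS a zeroN ha (validN_zero n)) as [c Hc]. exists c. intros xi hxi.
    specialize (Hc xi hxi). rewrite mlen_zero, Rminus_0_r in Hc. exact Hc. }
  destruct (Hget zeroN (validN_zero n)) as [c0 H0].
  destruct (uniform_bound_fin (fun i => P (axis_index i (2 * Q))) n) as [c1 H1].
  - intros i c c' Hc hcc xi hxi. eapply cstar_le_weaken; [apply Hc; auto|].
    apply Rmult_le_compat_r; [apply Rlt_le, Rpower_pos | auto].
  - intros i hi. apply Hget, validN_axis_index; auto.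
  - exists (INR (S n) ^ S Q * Rmax c0 c1). apply (coef_moments_of_cstar n theta); auto.
Qed.

(** * The Schur test on the lattice *)

Section Schur.
Variable n : nat.
Variable f : (nat -> Z) -> (nat -> Z) -> C.
Variables v a : (nat -> Z) -> R.
Variable A : R.
Hypothesis v_pos : forall j, validZ n j -> 0 < v j.
Hypothesis a_l2 : forall F, finset n F -> lsum F (fun k => a k ^ 2) <= A.
Hypothesis f_le_kernel : forall j k, validZ n j -> validZ n k ->
  v j * Cmod (f j k) <= a k * kernel n (subZ j k).

Let g j k := a k ^ 2 * kernel n (subZ j k).

Lemma schur_g_nonneg j k : 0 <= g j k.
Proof. apply Rmult_le_pos; [apply pow2_ge_0 | apply Rlt_le, kernel_pos]. Qed.

Lemma schur_g_summable j : has_sumR n (g j) (zsumR n (g j)).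
Proof.
  destruct (has_sumR_of_bounded n (g j) A) as [Y HY].
  - intros; apply schur_g_nonneg.
  - intros F HF. eapply Rle_trans; [|apply (a_l2 F HF)]. apply lsum_le. intros k _.
    pose proof (kernel_le1 n (subZ j k)). pose proof (pow2_ge_0 (a k)). unfold g. nra.
  - rewrite (zsumR_eq _ _ _ HY). exact HY.
Qed.

Lemma schur_g_sum_nonneg j : 0 <= zsumR n (g j).
Proof. apply (has_sumR_nonneg n (g j)); [intros; apply schur_g_nonneg | apply schur_g_summable]. Qed.

(* Cauchy-Schwarz against the weights [kernel n (j - k)], whose sum is at most [6 ^ n]. *)
Lemma schur_row j F : validZ n j -> finset n F ->
  v j * sumR F (fun k => Cmod (f j k)) <= sqrt (6 ^ n * zsumR n (g j)).
Proof.
  intros hj HF.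
  assert (Hfa : v j * sumR F (fun k => Cmod (f j k)) <= lsum F (fun k => a k * kernel n (subZ j k))).
  { rewrite sumR_lsum, <- lsum_scal. apply lsum_le. intros k hk.
    apply f_le_kernel; auto. eapply finset_In_valid; eauto. }
  assert (H0 : 0 <= v j * sumR F (fun k => Cmod (f j k))).
  { apply Rmult_le_pos; [apply Rlt_le, v_pos; auto | apply lsum_nonneg; intros; apply Cmod_ge_0]. }
  apply Rsqr_incr_0_var; [|apply sqrt_pos]. rewrite Rsqr_sqrt, Rsqr_pow2.
  2: { apply Rmult_le_pos; [apply pow_le; lra | apply schur_g_sum_nonneg]. }
  eapply Rle_trans; [apply pow_incr; split; [exact H0 | exact Hfa]|].
  eapply Rle_trans; [apply cauchy_schwarz_lsum; intros; apply Rlt_le, kernel_pos|].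
  apply Rmult_le_compat.
  - apply lsum_nonneg; intros; apply Rlt_le, kernel_pos.
  - apply lsum_nonneg; intros; apply schur_g_nonneg.
  - apply lsum_kernel_reflect_le; auto.
  - apply (has_sumR_partial n (g j)); auto. intros; apply schur_g_nonneg. apply schur_g_summable.
Qed.

Lemma schur_row_sum j : validZ n j ->
  exists S, has_sumC n (f j) S /\ (v j * Cmod S) ^ 2 <= 6 ^ n * zsumR n (g j).
Proof.
  intros hj. pose proof (v_pos j hj) as hv.
  assert (Habs : forall F, finset n F ->
            sumR F (fun k => Cmod (f j k)) <= sqrt (6 ^ n * zsumR n (g j)) / v j).
  { intros F HF. apply Rle_div_r; auto. rewrite Rmult_comm. apply schur_row; auto. }
  destruct (has_sumC_of_abs_bounded n _ _ Habs) as [S HS]. exists S. split; auto.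
  assert (Hle : v j * Cmod S <= sqrt (6 ^ n * zsumR n (g j))).
  { rewrite Rmult_comm. apply Rle_div_r; auto. apply (Cmod_has_sumC_le n (f j)); auto. }
  rewrite <- (pow2_sqrt (6 ^ n * zsumR n (g j))).
  - apply pow_incr. split; auto. apply Rmult_le_pos; [lra | apply Cmod_ge_0].
  - apply Rmult_le_pos; [apply pow_le; lra | apply schur_g_sum_nonneg].
Qed.

Lemma schur_column G : finset n G -> lsum G (fun j => zsumR n (g j)) <= 6 ^ n * A.
Proof.
  intros HG. apply (has_sumR_le n (fun k => lsum G (fun j => g j k))).
  - apply has_sumR_lsum. intros; apply schur_g_summable.
  - intros F HF. apply Rle_trans with (lsum F (fun k => 6 ^ n * a k ^ 2)).
    + apply lsum_le. intros k hk. unfold g.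
      rewrite (lsum_scal G (fun j => kernel n (subZ j k))), Rmult_comm.
      apply Rmult_le_compat_r; [apply pow2_ge_0|]. apply lsum_kernel_translate_le; auto.
      eapply finset_In_valid; eauto.
    + rewrite lsum_scal. apply Rmult_le_compat_l; [apply pow_le; lra | auto].
Qed.

Lemma schur_test :
  (forall j, validZ n j -> exists S, has_sumC n (f j) S) /\
  (forall G, finset n G -> lsum G (fun j => (v j * Cmod (zsumC n (f j))) ^ 2) <= 6 ^ n * 6 ^ n * A).
Proof.
  split.
  { intros j hj. destruct (schur_row_sum j hj) as [S [HS _]]. eauto. }
  intros G HG. apply Rle_trans with (lsum G (fun j => 6 ^ n * zsumR n (g j))).
  - apply lsum_le. intros j hj.
    destruct (schur_row_sum j (finset_In_valid n G j HG hj)) as [S [HS Hle]].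
    rewrite (zsumC_eq _ _ _ HS). exact Hle.
  - rewrite lsum_scal, Rmult_assoc.
    apply Rmult_le_compat_l; [apply pow_le; lra | apply schur_column; auto].
Qed.

End Schur.

Definition hs_density (n : nat) (s : R) (u : (nat -> Z) -> C) (k : nat -> Z) : R :=
  sweight n s k * Cmod (u k) ^ 2.

Lemma sweight_pos n s k : 0 < sweight n s k.
Proof. apply Rpower_pos. Qed.

Lemma hs_density_nonneg n s u k : 0 <= hs_density n s u k.
Proof. apply Rmult_le_pos; [apply Rlt_le, sweight_pos | apply pow2_ge_0]. Qed.

Lemma hs_norm_zsumR n s u : hs_norm n s u = sqrt (zsumR n (hs_density n s u)).
Proof. reflexivity. Qed.

Lemma hs_norm_sq n s u : in_Hs n s u -> hs_norm n s u ^ 2 = zsumR n (hs_density n s u).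
Proof.
  intros [S HS]. change (has_sumR n (hs_density n s u) S) in HS.
  rewrite hs_norm_zsumR. apply pow2_sqrt. rewrite (zsumR_eq _ _ _ HS).
  apply (has_sumR_nonneg n (hs_density n s u)); auto. intros; apply hs_density_nonneg.
Qed.

Lemma hs_partial_le n s u F : in_Hs n s u -> finset n F ->
  sumR F (hs_density n s u) <= hs_norm n s u ^ 2.
Proof.
  intros Hu HF. rewrite hs_norm_sq by auto. destruct Hu as [S HS].
  change (has_sumR n (hs_density n s u) S) in HS. rewrite (zsumR_eq _ _ _ HS).
  apply (has_sumR_partial n (hs_density n s u)); auto. intros; apply hs_density_nonneg.
Qed.

Lemma in_Hs_of_bounded n s u B : (forall F, finset n F -> sumR F (hs_density n s u) <= B) ->
  in_Hs n s u /\ hs_norm n s u <= sqrt B.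
Proof.
  intros HB. destruct (has_sumR_of_bounded n (hs_density n s u) B) as [S HS]; auto.
  { intros; apply hs_density_nonneg. }
  split; [exists S; auto|]. rewrite hs_norm_zsumR. apply sqrt_le_1_alt.
  rewrite (zsumR_eq _ _ _ HS). apply (has_sumR_le n _ _ _ HS HB).
Qed.

Lemma hs_norm_eqv n s u v : in_Hs n s u -> eqv n u v -> hs_norm n s u = hs_norm n s v.
Proof.
  intros [S HS] Huv. change (has_sumR n (hs_density n s u) S) in HS.
  rewrite !hs_norm_zsumR, (zsumR_eq _ _ _ HS). f_equal. symmetry. apply zsumR_eq.
  eapply has_sumR_ext; [|exact HS]. intros k hk. unfold hs_density. rewrite Huv; auto.
Qed.

(** * Boundedness of [P_rho] *)

Lemma toR_valid n k : validZ n k -> validR n (toR k).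
Proof. intros h i hi. unfold toR. rewrite h; auto. Qed.

Lemma sweight_peetre n s j k :
  sweight n s j <= Rpower 2 (Rabs s) * sweight n s k * Rpower (bracket n (subZ j k)) (Rabs s).
Proof.
  destruct (bracket_peetre n j k) as [Hjk Hkj].
  pose proof (bracket_ge1 n j). pose proof (bracket_ge1 n k). pose proof (bracket_ge1 n (subZ j k)).
  change (sweight n s j) with (Rpower (bracket n j) s).
  change (sweight n s k) with (Rpower (bracket n k) s).
  apply Rpower_peetre; auto; lra.
Qed.

Lemma coef_decay_sq_le n Q m rho M k l : coef_decay n Q m rho M -> validZ n k -> validZ n l ->
  Cmod (rho (toR k) l) ^ 2 * bracket n l ^ (2 * Q) <= Rpower 2 (Rabs m) * M ^ 2 * Rpower (bracket n k) m.
Proof.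
  intros HC hk hl. pose proof (coef_decay_nonneg _ _ _ _ _ HC) as hM.
  pose proof (HC (toR k) l (toR_valid n k hk) hl) as Hdecay.
  change (normR n (toR k)) with (normZ n k) in Hdecay.
  pose proof (Rpower_one_plus_sq_le (normZ n k) m (sqrt_pos _)) as Hm.
  replace (2 * Q)%nat with (Q * 2)%nat by lia. rewrite pow_mult, <- Rpow_mult_distr.
  apply Rle_trans with ((M * Rpower (1 + normZ n k) m) ^ 2).
  - apply pow_incr. split; auto. apply Rmult_le_pos; [apply Cmod_ge_0|].
    apply pow_le. pose proof (bracket_ge1 n l). lra.
  - rewrite Rpow_mult_distr.
    replace (Rpower 2 (Rabs m) * M ^ 2 * Rpower (bracket n k) m)
      with (M ^ 2 * (Rpower 2 (Rabs m) * Rpower (bracket n k) m)) by ring.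
    apply Rmult_le_compat_l; [apply pow2_ge_0 | exact Hm].
Qed.

Definition prho_term (n : nat) (theta : nat -> nat -> R) (rho : Symb) (u : (nat -> Z) -> C)
    (j k : nat -> Z) : C :=
  Cmult (Cmult (u k) (rho (toR k) (subZ j k))) (cocycle n theta (subZ j k) k).

Definition peetre_const (s m : R) : R := sqrt (Rpower 2 (Rabs s) * Rpower 2 (Rabs m)).


Lemma zsumC_lincomb n f g h (a b : C) : (exists S, has_sumC n f S) -> (exists T, has_sumC n g T) ->
  (forall k, validZ n k -> h k = Cplus (Cmult a (f k)) (Cmult b (g k))) ->
  zsumC n h = Cplus (Cmult a (zsumC n f)) (Cmult b (zsumC n g)).
Proof.
  intros [S HS] [T HT] Hh. rewrite (zsumC_eq _ _ _ HS), (zsumC_eq _ _ _ HT).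
  apply zsumC_eq. eapply has_sumC_ext; [|apply has_sumC_lincomb; eauto].
  intros k hk. symmetry. auto.
Qed.

Section PrhoBounds.
Variables (n : nat) (theta : nat -> nat -> R) (Q : nat) (m s : R).
Hypothesis order_Q : Rabs s + 2 * INR n <= 2 * INR Q.

(* Peetre's inequality moves the weight from [j] to [k] at the cost of [w(j - k)^|s|], which the
   decay of the coefficients in [j - k] absorbs together with the kernel. *)
Lemma coef_kernel_sq_le rho M j k : coef_decay n Q m rho M -> validZ n j -> validZ n k ->
  sweight n s j * Cmod (rho (toR k) (subZ j k)) ^ 2 * pbracket n (subZ j k) ^ 2
    <= Rpower 2 (Rabs s) * Rpower 2 (Rabs m) * M ^ 2 * sweight n (s + m) k.
Proof.
  intros HC hj hk. set (l := subZ j k).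
  pose proof (sweight_peetre n s j k) as Hs. fold l in Hs.
  pose proof (pbracket_sq_le n l s Q order_Q) as Hl.
  pose proof (coef_decay_sq_le n Q m rho M k l HC hk (subZ_valid n j k hj hk)) as Hc.
  change (sweight n (s + m) k) with (Rpower (bracket n k) (s + m)). rewrite Rpower_plus.
  change (sweight n s k) with (Rpower (bracket n k) s) in Hs.
  set (r2 := Cmod (rho (toR k) l) ^ 2) in *. set (P2 := pbracket n l ^ 2) in *.
  set (A := Rpower 2 (Rabs s) * Rpower (bracket n k) s) in *.
  set (Ls := Rpower (bracket n l) (Rabs s)) in *.
  assert (0 <= r2) by apply pow2_ge_0. assert (0 <= P2) by apply pow2_ge_0.
  assert (0 < A) by (apply Rmult_lt_0_compat; apply Rpower_pos).
  assert (0 < Ls) by apply Rpower_pos.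
  apply Rle_trans with (A * (r2 * bracket n l ^ (2 * Q))).
  - apply Rle_trans with (A * Ls * r2 * P2); [repeat apply Rmult_le_compat_r; auto|].
    replace (A * Ls * r2 * P2) with (A * (r2 * (Ls * P2))) by ring.
    apply Rmult_le_compat_l; [lra|]. apply Rmult_le_compat_l; auto.
  - replace (Rpower 2 (Rabs s) * Rpower 2 (Rabs m) * M ^ 2
               * (Rpower (bracket n k) s * Rpower (bracket n k) m))
      with (A * (Rpower 2 (Rabs m) * M ^ 2 * Rpower (bracket n k) m)) by (unfold A; ring).
    apply Rmult_le_compat_l; [lra | exact Hc].
Qed.

Lemma prho_term_le rho M u j k : coef_decay n Q m rho M -> validZ n j -> validZ n k ->
  sqrt (sweight n s j) * Cmod (prho_term n theta rho u j k)
    <= peetre_const s m * M * sqrt (sweight n (s + m) k) * Cmod (u k) * kernel n (subZ j k).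
Proof.
  intros HC hj hk. pose proof (coef_decay_nonneg _ _ _ _ _ HC) as hM.
  pose proof (coef_kernel_sq_le rho M j k HC hj hk) as H.
  pose proof (sweight_pos n s j). pose proof (sweight_pos n (s + m) k).
  pose proof (pbracket_ge1 n (subZ j k)).
  assert (0 <= Rpower 2 (Rabs s) * Rpower 2 (Rabs m)).
  { pose proof (Rpower_pos 2 (Rabs s)). pose proof (Rpower_pos 2 (Rabs m)). nra. }
  unfold prho_term, peetre_const. rewrite !Cmod_mult, Cmod_cocycle, Rmult_1_r.
  set (c2 := Rpower 2 (Rabs s) * Rpower 2 (Rabs m)) in *.
  set (r := Cmod (rho (toR k) (subZ j k))) in *. set (P := pbracket n (subZ j k)) in *.
  replace (kernel n (subZ j k)) with (/ P) by reflexivity.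
  assert (0 < / P) by (apply Rinv_0_lt_compat; lra).
  apply Rsqr_incr_0_var.
  2: { repeat apply Rmult_le_pos; auto using sqrt_pos, Cmod_ge_0; lra. }
  rewrite !Rsqr_pow2, !Rpow_mult_distr, !pow2_sqrt by lra.
  apply (Rmult_le_reg_r (P ^ 2)); [nra|].
  replace (c2 * M ^ 2 * sweight n (s + m) k * Cmod (u k) ^ 2 * (/ P) ^ 2 * P ^ 2)
    with (c2 * M ^ 2 * sweight n (s + m) k * Cmod (u k) ^ 2) by (field; lra).
  replace (sweight n s j * (Cmod (u k) ^ 2 * r ^ 2) * P ^ 2)
    with (sweight n s j * r ^ 2 * P ^ 2 * Cmod (u k) ^ 2) by ring.
  apply Rmult_le_compat_r; [apply pow2_ge_0 | exact H].
Qed.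

Lemma Prho_Hs_bound rho M u : coef_decay n Q m rho M -> in_Hs n (s + m) u ->
  (forall j, validZ n j -> exists S, has_sumC n (prho_term n theta rho u j) S) /\
  in_Hs n s (Prho n theta rho u) /\
  hs_norm n s (Prho n theta rho u) <= peetre_const s m * 6 ^ n * M * hs_norm n (s + m) u.
Proof.
  intros HC Hu. pose proof (coef_decay_nonneg _ _ _ _ _ HC) as hM.
  set (c := peetre_const s m * M).
  assert (hc : 0 <= c) by (apply Rmult_le_pos; [apply sqrt_pos | auto]).
  destruct (schur_test n (prho_term n theta rho u) (fun j => sqrt (sweight n s j))
              (fun k => c * sqrt (sweight n (s + m) k) * Cmod (u k)) (c ^ 2 * hs_norm n (s + m) u ^ 2))
    as [Hsum Hcol].
  - intros j _. apply sqrt_lt_R0, sweight_pos.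
  - intros F HF. rewrite (lsum_ext F _ (fun k => c ^ 2 * hs_density n (s + m) u k)).
    + rewrite lsum_scal. apply Rmult_le_compat_l; [apply pow2_ge_0 | apply hs_partial_le; auto].
    + intros k _. unfold hs_density.
      rewrite !Rpow_mult_distr, pow2_sqrt; [ring | apply Rlt_le, sweight_pos].
  - intros j k hj hk. unfold c. apply prho_term_le; auto.
  - split; auto.
    set (B := 6 ^ n * 6 ^ n * (c ^ 2 * hs_norm n (s + m) u ^ 2)) in Hcol.
    destruct (in_Hs_of_bounded n s (Prho n theta rho u) B) as [HP Hnorm].
    { intros G HG. eapply Rle_trans; [|apply (Hcol G HG)]. right. apply lsum_ext. intros j _.
      unfold hs_density. rewrite Rpow_mult_distr, pow2_sqrt; [reflexivity | apply Rlt_le, sweight_pos]. }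
    split; auto. eapply Rle_trans; [exact Hnorm|]. right.
    replace B with ((6 ^ n * c * hs_norm n (s + m) u) ^ 2) by (unfold B; ring).
    rewrite sqrt_pow2; [unfold c; ring|].
    apply Rmult_le_pos; [apply Rmult_le_pos; [apply pow_le; lra | auto] | apply sqrt_pos].
Qed.

Lemma Prho_is_extension rho M : coef_decay n Q m rho M ->
  is_extension n theta rho s m (Prho n theta rho).
Proof.
  intros HC. pose proof (coef_decay_nonneg _ _ _ _ _ HC) as hM. repeat split.
  - intros u Hu. apply (Prho_Hs_bound rho M u HC Hu).
  - intros u v a b Hu Hv j hj. apply zsumC_lincomb.
    + apply (Prho_Hs_bound rho M u HC Hu); auto.
    + apply (Prho_Hs_bound rho M v HC Hv); auto.
    + intros k _. unfold lincomb. ring.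
  - exists (peetre_const s m * 6 ^ n * M). split.
    + apply Rmult_le_pos; auto. apply Rmult_le_pos; [apply sqrt_pos | apply pow_le; lra].
    + intros u Hu. apply (Prho_Hs_bound rho M u HC Hu).
Qed.

Lemma Prho_lincomb_symbol rho1 rho2 M1 M2 (a b : C) u :
  coef_decay n Q m rho1 M1 -> coef_decay n Q m rho2 M2 -> in_Hs n (s + m) u ->
  eqv n (Prho n theta (fun xi => lincomb a (rho1 xi) b (rho2 xi)) u)
        (lincomb a (Prho n theta rho1 u) b (Prho n theta rho2 u)).
Proof.
  intros HC1 HC2 Hu j hj. apply zsumC_lincomb.
  - apply (Prho_Hs_bound rho1 M1 u HC1 Hu); auto.
  - apply (Prho_Hs_bound rho2 M2 u HC2 Hu); auto.
  - intros k _. unfold prho_term, lincomb. ring.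
Qed.

End PrhoBounds.

(** * Density of finitely supported vectors *)

Definition truncate (F0 : list (nat -> Z)) (u : (nat -> Z) -> C) : (nat -> Z) -> C :=
  fun k => if excluded_middle_informative (In k F0) then u k else RtoC 0.
Definition tail (F0 : list (nat -> Z)) (u : (nat -> Z) -> C) : (nat -> Z) -> C :=
  fun k => if excluded_middle_informative (In k F0) then RtoC 0 else u k.

Lemma tail_add_truncate F0 u : lincomb (RtoC 1) (tail F0 u) (RtoC 1) (truncate F0 u) = u.
Proof.
  apply functional_extensionality. intros k. unfold lincomb, tail, truncate.
  destruct excluded_middle_informative; ring.
Qed.

Lemma truncate_rapid n F0 u : rapid n (truncate F0 u).
Proof.
  intros p. exists (lsum F0 (fun k => Cmod (u k) * (1 + normZ n k) ^ p)). intros k hk.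
  assert (Hnn : forall k, 0 <= Cmod (u k) * (1 + normZ n k) ^ p).
  { intros k'. apply Rmult_le_pos; [apply Cmod_ge_0|].
    apply pow_le. assert (0 <= normZ n k') by apply sqrt_pos. lra. }
  unfold truncate. destruct excluded_middle_informative as [Hin|].
  - apply (lsum_In_le F0 (fun k => Cmod (u k) * (1 + normZ n k) ^ p)); auto.
  - rewrite Cmod_0, Rmult_0_l. apply lsum_nonneg; auto.
Qed.

Lemma in_Hs_dominated n s u w : in_Hs n s u -> (forall k, Cmod (w k) <= Cmod (u k)) ->
  in_Hs n s w.
Proof.
  intros Hu Hwu. apply (in_Hs_of_bounded n s w (hs_norm n s u ^ 2)). intros F HF.
  eapply Rle_trans; [|apply (hs_partial_le n s u F Hu HF)]. apply lsum_le. intros k _.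
  unfold hs_density. apply Rmult_le_compat_l; [apply Rlt_le, sweight_pos|].
  apply pow_incr. split; [apply Cmod_ge_0 | auto].
Qed.

Lemma truncate_Hs n s F0 u : in_Hs n s u -> in_Hs n s (truncate F0 u).
Proof.
  intros Hu. apply (in_Hs_dominated n s u); auto. intros k. unfold truncate.
  destruct excluded_middle_informative; [lra | rewrite Cmod_0; apply Cmod_ge_0].
Qed.

Lemma tail_Hs n s F0 u : in_Hs n s u -> in_Hs n s (tail F0 u).
Proof.
  intros Hu. apply (in_Hs_dominated n s u); auto. intros k. unfold tail.
  destruct excluded_middle_informative; [rewrite Cmod_0; apply Cmod_ge_0 | lra].
Qed.

Lemma tail_small n s u e : in_Hs n s u -> 0 < e ->
  exists F0, finset n F0 /\ hs_norm n s (tail F0 u) <= e.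
Proof.
  intros [S HS] he. change (has_sumR n (hs_density n s u) S) in HS.
  destruct (HS (e ^ 2 / 2)) as [F0 [HF0 A]]; [nra|].
  exists F0. split; auto. rewrite <- (sqrt_pow2 e) by lra.
  apply in_Hs_of_bounded. intros G HG.
  set (G' := filter (fun k => if excluded_middle_informative (In k F0) then false else true) G).
  assert (HG' : finset n (F0 ++ G')).
  { destruct HF0 as [N0 V0], HG as [NG VG]. split.
    - apply NoDup_app; auto; [apply NoDup_filter; auto|].
      intros x hx hx'. apply filter_In in hx'. destruct hx' as [_ hb].
      destruct excluded_middle_informative; [discriminate | contradiction].
    - apply Forall_app. split; auto. apply Forall_forall. intros x hx. apply filter_In in hx.
      eapply Forall_forall in VG; [exact VG | tauto]. }
  assert (Htail : sumR G (hs_density n s (tail F0 u)) = sumR G' (hs_density n s u)).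
  { unfold G'. clear. induction G as [|k G IH]; simpl; auto. unfold hs_density at 1, tail at 1.
    destruct excluded_middle_informative; simpl; rewrite IH; [rewrite Cmod_0; ring | reflexivity]. }
  pose proof (A _ HG' (incl_appl _ (incl_refl _))) as A1. pose proof (A _ HF0 (incl_refl _)) as A2.
  rewrite sumR_lsum, lsum_app in A1. rewrite sumR_lsum in A2. rewrite Htail, sumR_lsum.
  apply Rabs_def2 in A1. apply Rabs_def2 in A2. lra.
Qed.

Lemma extension_pointwise_bound n theta rho s m T : is_extension n theta rho s m T ->
  exists c, 0 <= c /\ forall d k, in_Hs n (s + m) d -> validZ n k ->
    sqrt (sweight n s k) * Cmod (T d k) <= c * hs_norm n (s + m) d.
Proof.
  intros [Hmap [_ [[c [hc Hc]] _]]]. exists c. split; auto. intros d k Hd hk.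
  eapply Rle_trans; [|apply Hc; auto].
  pose proof (hs_partial_le n s (T d) _ (Hmap d Hd) (finset_single n k hk)) as H.
  rewrite sumR_lsum, lsum_cons, lsum_nil, Rplus_0_r in H. unfold hs_density in H.
  rewrite <- (sqrt_pow2 (Cmod (T d k))) by apply Cmod_ge_0.
  rewrite <- sqrt_mult_alt by apply Rlt_le, sweight_pos.
  rewrite <- (sqrt_pow2 (hs_norm n s (T d))) by apply sqrt_pos. apply sqrt_le_1_alt. exact H.
Qed.

Lemma Cmod_lincomb_defect_le (x y z a b : C) :
  Cmod (Cminus x (Cplus (Cmult a y) (Cmult b z))) <= Cmod x + Cmod a * Cmod y + Cmod b * Cmod z.
Proof.
  unfold Cminus. eapply Rle_trans; [apply Cmod_triangle|]. rewrite Cmod_opp.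
  pose proof (Cmod_triangle (Cmult a y) (Cmult b z)). rewrite !Cmod_mult in H. lra.
Qed.

Lemma extension_split n theta rho s m T F0 u k : is_extension n theta rho s m T ->
  in_Hs n (s + m) u -> validZ n k -> T u k = Cplus (T (tail F0 u) k) (T (truncate F0 u) k).
Proof.
  intros [_ [HL _]] Hu hk. rewrite <- (tail_add_truncate F0 u) at 1.
  rewrite (HL _ _ _ _ (tail_Hs _ _ F0 _ Hu) (truncate_Hs _ _ F0 _ Hu) k hk). unfold lincomb. ring.
Qed.

Lemma Rle_0_of_le_scal_eps x C : 0 <= C -> (forall e, 0 < e -> x <= C * e) -> x <= 0.
Proof.
  intros hC H. apply Rle_plus_epsilon. intros e he. rewrite Rplus_0_l.
  eapply Rle_trans; [apply (H (e / (C + 1))); apply Rdiv_lt_0_compat; lra|].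
  unfold Rdiv. rewrite <- Rmult_assoc. apply Rle_div_l; [lra|]. nra.
Qed.

(* Density: the tails [tail F0 u] are small in [H^(s+m)] and the three maps are bounded. *)
Lemma extensions_lincomb_eq n theta rho1 rho2 rho3 s m T1 T2 T3 (a b : C) :
  is_extension n theta rho1 s m T1 -> is_extension n theta rho2 s m T2 ->
  is_extension n theta rho3 s m T3 ->
  (forall u F0, in_Hs n (s + m) u -> finset n F0 ->
     eqv n (T3 (truncate F0 u)) (lincomb a (T1 (truncate F0 u)) b (T2 (truncate F0 u)))) ->
  forall u, in_Hs n (s + m) u -> eqv n (T3 u) (lincomb a (T1 u) b (T2 u)).
Proof.
  intros HT1 HT2 HT3 Hfin u Hu k hk.
  destruct (extension_pointwise_bound _ _ _ _ _ _ HT1) as [c1 [hc1 B1]].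
  destruct (extension_pointwise_bound _ _ _ _ _ _ HT2) as [c2 [hc2 B2]].
  destruct (extension_pointwise_bound _ _ _ _ _ _ HT3) as [c3 [hc3 B3]].
  pose proof (Cmod_ge_0 a). pose proof (Cmod_ge_0 b).
  set (C := c3 + Cmod a * c1 + Cmod b * c2).
  set (delta := Cminus (T3 u k) (lincomb a (T1 u) b (T2 u) k)).
  assert (Hsmall : forall e, 0 < e -> sqrt (sweight n s k) * Cmod delta <= C * e).
  { intros e he. destruct (tail_small n (s + m) u e Hu he) as [F0 [HF0 Hd]].
    set (d := tail F0 u). assert (Hd' : in_Hs n (s + m) d) by (apply tail_Hs; auto).
    assert (Hdelta : delta = Cminus (T3 d k) (Cplus (Cmult a (T1 d k)) (Cmult b (T2 d k)))).
    { pose proof (Hfin u F0 Hu HF0 k hk) as Hft. unfold lincomb in Hft.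
      unfold delta, lincomb.
      rewrite (extension_split _ _ _ _ _ T1 F0 u k HT1), (extension_split _ _ _ _ _ T2 F0 u k HT2),
        (extension_split _ _ _ _ _ T3 F0 u k HT3) by auto.
      rewrite Hft. fold d. ring. }
    rewrite Hdelta. pose proof (sqrt_pos (sweight n s k)).
    eapply Rle_trans; [apply Rmult_le_compat_l; [auto | apply Cmod_lincomb_defect_le]|].
    specialize (B1 d k Hd' hk). specialize (B2 d k Hd' hk). specialize (B3 d k Hd' hk).
    apply Rle_trans with (C * hs_norm n (s + m) d); [unfold C; nra|].
    apply Rmult_le_compat_l; [unfold C; nra | auto]. }
  apply Rle_0_of_le_scal_eps in Hsmall; [|unfold C; nra].
  pose proof (sqrt_lt_R0 _ (sweight_pos n s k)). pose proof (Cmod_ge_0 delta).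
  apply Ceq_minus, Cmod_eq_0. fold delta. nra.
Qed.

Lemma extension_unique n theta rho s m T T' :
  is_extension n theta rho s m T -> is_extension n theta rho s m T' ->
  forall u, in_Hs n (s + m) u -> eqv n (T u) (T' u).
Proof.
  intros HT HT' u Hu k hk.
  assert (Hfin : forall v F0, in_Hs n (s + m) v -> finset n F0 ->
            eqv n (T' (truncate F0 v))
              (lincomb (RtoC 1) (T (truncate F0 v)) (RtoC 0) (T (truncate F0 v)))).
  { intros v F0 _ _ j hj. destruct HT as [_ [_ [_ HP]]], HT' as [_ [_ [_ HP']]].
    unfold lincomb. rewrite (HP' _ (truncate_rapid n F0 v) j hj), (HP _ (truncate_rapid n F0 v) j hj).
    ring. }
  rewrite (extensions_lincomb_eq n theta rho rho rho s m T T T' _ _ HT HT HT' Hfin u Hu k hk).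
  unfold lincomb. ring.
Qed.

Lemma extension_lincomb_symbol n theta Q m s rho1 rho2 M1 M2 (a b : C) :
  Rabs s + 2 * INR n <= 2 * INR Q -> coef_decay n Q m rho1 M1 -> coef_decay n Q m rho2 M2 ->
  forall T1 T2 T3, is_extension n theta rho1 s m T1 -> is_extension n theta rho2 s m T2 ->
  is_extension n theta (fun xi => lincomb a (rho1 xi) b (rho2 xi)) s m T3 ->
  forall u, in_Hs n (s + m) u -> eqv n (T3 u) (lincomb a (T1 u) b (T2 u)).
Proof.
  intros HQ HC1 HC2 T1 T2 T3 HT1 HT2 HT3.
  apply (extensions_lincomb_eq _ _ _ _ _ _ _ _ _ _ _ _ HT1 HT2 HT3).
  intros u F0 Hu _ j hj. set (t := truncate F0 u). pose proof (truncate_rapid n F0 u) as Ht.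
  destruct HT1 as [_ [_ [_ HP1]]], HT2 as [_ [_ [_ HP2]]], HT3 as [_ [_ [_ HP3]]].
  rewrite (HP3 t Ht j hj), (Prho_lincomb_symbol n theta Q m s HQ rho1 rho2 M1 M2 a b t HC1 HC2); auto.
  - unfold lincomb. rewrite (HP1 t Ht j hj), (HP2 t Ht j hj). reflexivity.
  - apply truncate_Hs; auto.
Qed.

Definition decay_order (n : nat) (s : R) : nat := (Z.to_nat (up (Rabs s)) + n)%nat.

Lemma decay_order_spec n s : Rabs s + 2 * INR n <= 2 * INR (decay_order n s).
Proof.
  unfold decay_order. destruct (archimed (Rabs s)) as [Hup _]. pose proof (Rabs_pos s).
  assert (Hz : (0 <= up (Rabs s))%Z) by (apply le_IZR; lra).
  rewrite plus_INR, (INR_IZR_INZ (Z.to_nat _)), Z2Nat.id by exact Hz. lra.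
Qed.

Theorem proposition10p4 :
  forall (n : nat) (theta : nat -> nat -> R), (2 <= n)%nat -> antisym n theta ->
  forall m s : R,
  (* P_rho extends uniquely to a continuous linear map H^(s+m) -> H^(s) *)
  (forall rho, in_symbol n theta m rho ->
     (exists T, is_extension n theta rho s m T) /\
     (forall T T', is_extension n theta rho s m T -> is_extension n theta rho s m T' ->
        forall u, in_Hs n (s + m) u -> eqv n (T u) (T' u))) /\
  (* rho |-> P_rho is linear *)
  (forall rho1 rho2 (a b : C), in_symbol n theta m rho1 -> in_symbol n theta m rho2 ->
     forall T1 T2 T3, is_extension n theta rho1 s m T1 -> is_extension n theta rho2 s m T2 ->
     is_extension n theta (fun xi => lincomb a (rho1 xi) b (rho2 xi)) s m T3 ->
     forall u, in_Hs n (s + m) u -> eqv n (T3 u) (lincomb a (T1 u) b (T2 u))) /\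
  (* ... and continuous: ||P_rho||_{L(H^(s+m),H^(s))} <= c p^(m)_N(rho) *)
  (exists (N : nat) (c : R), 0 <= c /\
     forall rho D, in_symbol n theta m rho -> deriv_family n theta rho D ->
     forall M, sym_bound n theta m D N M ->
     forall T, is_extension n theta rho s m T ->
     forall u, in_Hs n (s + m) u -> hs_norm n s (T u) <= c * M * hs_norm n (s + m) u).
Proof.
  intros n theta _ _ m s. set (Q := decay_order n s).
  assert (HQ : Rabs s + 2 * INR n <= 2 * INR Q) by apply decay_order_spec.
  split; [|split].
  - intros rho Hr. destruct (coef_decay_of_symbol n theta Q m rho Hr) as [M HC]. split.
    + exists (Prho n theta rho). exact (Prho_is_extension n theta Q m s HQ rho M HC).
    + apply extension_unique.
  - intros rho1 rho2 a b H1 H2.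
    destruct (coef_decay_of_symbol n theta Q m rho1 H1) as [M1 HC1].
    destruct (coef_decay_of_symbol n theta Q m rho2 H2) as [M2 HC2].
    exact (extension_lincomb_symbol n theta Q m s rho1 rho2 M1 M2 a b HQ HC1 HC2).
  - exists (2 * Q)%nat, (peetre_const s m * 6 ^ n * INR (S n) ^ S Q). split.
    { apply Rmult_le_pos; [apply Rmult_le_pos; [apply sqrt_pos | apply pow_le; lra]|].
      apply pow_le, pos_INR. }
    intros rho D Hr HD M HS T HT u Hu.
    pose proof (coef_decay_of_sym_bound n theta Q m rho D M HD HS) as HC.
    pose proof (Prho_is_extension n theta Q m s HQ rho _ HC) as HP.
    rewrite (hs_norm_eqv n s (T u) (Prho n theta rho u));
      [| apply (proj1 HT); auto | apply (extension_unique n theta rho s m T _ HT HP); auto].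
    destruct (Prho_Hs_bound n theta Q m s HQ rho _ u HC Hu) as [_ [_ Hb]].
    eapply Rle_trans; [exact Hb | right; ring].
Qed.
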